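(* Fix constants $\beta_\text{m}>0$, $\beta_\text{I}>0$, a target threshold $\gamma_\text{t}>0$, LoS probabilities $p_\text{L}(\theta_\text{m}),p_\text{L}(\theta_\text{I})\in[0,1]$ and Rician factors $K_\text{m}=K_\text{m}(\theta_\text{m})>0$, $K_\text{I}=K_\text{I}(\theta_\text{I})>0$. Let $h_\text{m},h_\text{I}$ be independent fading gains distributed as in the context (each link is independently LoS with probability $p_\text{L}(\theta_i)$ and NLoS otherwise), and let $\gamma=\frac{h_\text{m}\beta_\text{m}}{h_\text{I}\beta_\text{I}}$. Then the outage probability $p_\text{o}=\mathbb{P}[\gamma<\gamma_\text{t}]$ equals $$p_\text{o}=p_\text{L}(\theta_\text{m})p_\text{L}(\theta_\text{I})\,p_\text{o}^{(\text{L,L})}+p_\text{L}(\theta_\text{m})(1-p_\text{L}(\theta_\text{I}))\,p_\text{o}^{(\text{L,N})}+(1-p_\text{L}(\theta_\text{m}))p_\text{L}(\theta_\text{I})\,p_\text{o}^{(\text{N,L})}+(1-p_\text{L}(\theta_\text{m}))(1-p_\text{L}(\theta_\text{I}))\,p_\text{o}^{(\text{N,N})},$$ where $p_\text{o}^{(e_\text{m},e_\text{I})}=\mathbb{P}[\gamma<\gamma_\text{t}\mid \text{main link in environment } e_\text{m},\ \text{interference link in environment } e_\text{I}]$ is given by: (1) both LoS: $$p_\text{o}^{(\text{L,L})}=1-Q\!\left(\sqrt{\frac{2K_\text{m}\beta_\text{m}}{\beta_\text{m}+\gamma_\text{t}\beta_\text{I}}},\sqrt{\frac{2\gamma_\text{t}K_\text{I}\beta_\text{I}}{\beta_\text{m}+\gamma_\text{t}\beta_\text{I}}}\right)+\frac{\gamma_\text{t}\beta_\text{I}}{\beta_\text{m}+\gamma_\text{t}\beta_\text{I}}\exp\!\left(-\frac{K_\text{m}\beta_\text{m}+\gamma_\text{t}K_\text{I}\beta_\text{I}}{\beta_\text{m}+\gamma_\text{t}\beta_\text{I}}\right)I_0\!\left(\frac{2\beta_\text{m}}{\beta_\text{m}+\gamma_\text{t}\beta_\text{I}}\sqrt{\frac{\gamma_\text{t}K_\text{m}K_\text{I}\beta_\text{I}}{\beta_\text{m}}}\right);$$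 (2) main LoS, interference NLoS: $$p_\text{o}^{(\text{L,N})}=\frac{\gamma_\text{t}\beta_\text{I}}{2\beta_\text{m}+\gamma_\text{t}\beta_\text{I}}\exp\!\left(-\frac{2K_\text{m}\beta_\text{m}}{2\beta_\text{m}+\gamma_\text{t}\beta_\text{I}}\right);$$ (3) main NLoS, interference LoS: $$p_\text{o}^{(\text{N,L})}=1-\frac{\beta_\text{m}}{2\gamma_\text{t}\beta_\text{I}+\beta_\text{m}}\exp\!\left(-\frac{2\gamma_\text{t}K_\text{I}\beta_\text{I}}{2\gamma_\text{t}\beta_\text{I}+\beta_\text{m}}\right);$$ (4) both NLoS: $$p_\text{o}^{(\text{N,N})}=\frac{\gamma_\text{t}\beta_\text{I}}{\beta_\text{m}+\gamma_\text{t}\beta_\text{I}}.$$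
   Context: Model: a receiver gets a desired signal over the main link (index m) and an interfering signal over the interference link (index I). For $i\in\{\text{m},\text{I}\}$, $\beta_i=\ell_i^{-\alpha_i(\theta_i)}P_i>0$ is the average received power (link distance $\ell_i$, path-loss exponent $\alpha_i(\theta_i)$, transmit power $P_i$), and $\theta_i$ is the elevation angle of link $i$. The signal-to-interference ratio is $\gamma=\frac{h_\text{m}\beta_\text{m}}{h_\text{I}\beta_\text{I}}$, where $h_\text{m},h_\text{I}$ are independent random fading gains. Each link $i$ is, independently, in a LoS environment with probability $p_\text{L}(\theta_i)$ (in the paper $p_\text{L}(\theta)=\frac{1}{1+a_1\exp\{-b_1(\theta-a_1)\}}$) and in an NLoS environment with probability $1-p_\text{L}(\theta_i)$. Given LoS, $h_i$ has density $f_\text{L}(h)=\frac12\exp\!\left(-K_i-\frac h2\right)I_0\!\left(\sqrt{2K_ih}\right)$, $h\ge0$ (noncentral chi-squared with 2 degrees of freedom and noncentrality $2K_i$), where $K_i=K_i(\theta_i)>0$ is the Rician factor (in the paper $K(\theta)=a_3\exp(b_3\theta)$). Given NLoS, $h_i$ has density $f_\text{N}(h)=e^{-h}$, $h\ge0$. $I_0$ is the modified Bessel function of the first kind of order zero, and $Q(a,b)=\int_b^\infty x\exp\!\left(-\frac{x^2+a^2}{2}\right)I_0(ax)\,dx$ is the first-order Marcum Q-function. *)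

From Stdlib Require Import Reals Lra ClassicalEpsilon.
Open Scope R_scope.

(* A chosen real satisfying P (if one exists; unique in all uses below). *)
Definition the_real (P : R -> Prop) : R := epsilon (inhabits 0) P.

Definition series_sum (u : nat -> R) : R :=
  the_real (fun l => Un_cv (fun n => sum_f_R0 u n) l).

Definition bessel_I0 (x : R) : R :=
  series_sum (fun k => (x / 2) ^ (2 * k) / (INR (Factorial.fact k)) ^ 2).

Definition RInt (f : R -> R) (a b : R) : R :=
  the_real (fun l => exists pr : Riemann_integrable f a b, RiemannInt pr = l).

Definition RInt_inf (f : R -> R) (a : R) : R :=
  the_real (fun l => forall eps, 0 < eps ->
    exists M, forall b, M <= b -> Rabs (RInt f a b - l) < eps).

Definition marcumQ (a b : R) : R :=
  RInt_inf (fun x => x * exp (- (x ^ 2 + a ^ 2) / 2) * bessel_I0 (a * x)) b.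

(* LoS: noncentral chi-squared, 2 dof, noncentrality 2K. *)
Definition dens_LoS (K : R) (h : R) : R :=
  / 2 * exp (- K - h / 2) * bessel_I0 (sqrt (2 * K * h)).
Definition dens_NLoS (h : R) : R := exp (- h).

Definition dens_mix (p K : R) (h : R) : R :=
  p * dens_LoS K h + (1 - p) * dens_NLoS h.

(* Outage probability P[ h_m bm / (h_I bI) < gt ] for independent nonnegative
   gains h_m, h_I with densities fm, fI (on [0,oo)):
     int_0^oo fI(y) ( int_0^{gt bI y / bm} fm(x) dx ) dy. *)
Definition outage (fm fI : R -> R) (bm bI gt : R) : R :=
  RInt_inf (fun y => fI y * RInt fm 0 (gt * bI * y / bm)) 0.

Definition po_LL_closed (bm bI gt Km KI : R) : R :=
  1 - marcumQ (sqrt (2 * Km * bm / (bm + gt * bI)))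
              (sqrt (2 * gt * KI * bI / (bm + gt * bI)))
    + gt * bI / (bm + gt * bI)
      * exp (- ((Km * bm + gt * KI * bI) / (bm + gt * bI)))
      * bessel_I0 (2 * bm / (bm + gt * bI) * sqrt (gt * Km * KI * bI / bm)).

Definition po_LN_closed (bm bI gt Km : R) : R :=
  gt * bI / (2 * bm + gt * bI) * exp (- (2 * Km * bm / (2 * bm + gt * bI))).

Definition po_NL_closed (bm bI gt KI : R) : R :=
  1 - bm / (2 * gt * bI + bm) * exp (- (2 * gt * KI * bI / (2 * gt * bI + bm))).

Definition po_NN_closed (bm bI gt : R) : R :=
  gt * bI / (bm + gt * bI).

From Pilot Require Import Defs.
From Stdlib Require Import Reals Lra Lia Factorial ClassicalEpsilon.
From Coquelicot Require Import Coquelicot.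
Open Scope R_scope.

(* Both fading laws are Poisson mixtures of Gamma laws: the NLoS gain is Gamma(1), and the
   noncentral chi-squared LoS gain is Gamma(j + 1) with probability Pois(K; j). Between Gamma
   laws the outage probability is a negative binomial tail, so each conditional outage is a
   Poisson mixture of negative binomial probabilities. In the LN and NL cases the mixture is a
   single Poisson series with a geometric term, summed by the generating function. In the
   LL case the negative binomial cdf is a binomial mixture of binomial cdfs, and two Poisson
   thinnings reduce the double series to
     sum_j Pois(A; j) P[Pois(B) <= j] - p sum_j Pois(A; j) Pois(B; j),
   the Poisson expansions of the Marcum Q-function and of the Bessel term. Series and
   integrals are exchanged by dominated convergence on compact intervals, monotone
   convergence on [0, +oo) and Tonelli's theorem for double series. *)

Lemma the_real_eq (P : R -> Prop) (l : R) :
  P l -> (forall l', P l' -> l' = l) -> the_real P = l.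
Proof.
  intros Hl Huniq. apply Huniq, (epsilon_spec (inhabits 0) P), (ex_intro _ l Hl).
Qed.

Lemma is_series_ext' (a b : nat -> R) (l : R) :
  (forall n, a n = b n) -> is_series a l -> is_series b l.
Proof. exact (is_series_ext a b l). Qed.

Lemma is_series_plus' (a b : nat -> R) (la lb : R) :
  is_series a la -> is_series b lb -> is_series (fun n => a n + b n) (la + lb).
Proof. exact (is_series_plus a b la lb). Qed.

Lemma is_series_minus' (a b : nat -> R) (la lb : R) :
  is_series a la -> is_series b lb -> is_series (fun n => a n - b n) (la - lb).
Proof. exact (is_series_minus a b la lb). Qed.

Lemma is_series_scal_l' (c : R) (a : nat -> R) (l : R) :
  is_series a l -> is_series (fun n => c * a n) (c * l).
Proof. exact (is_series_scal_l c a l). Qed.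

Lemma is_series_partial_sums (a : nat -> R) (l : R) :
  is_series a l <-> is_lim_seq (sum_f_R0 a) l.
Proof. now rewrite is_series_Reals, is_lim_seq_Reals. Qed.

Lemma series_sum_eq (u : nat -> R) (l : R) : is_series u l -> series_sum u = l.
Proof.
  intros Hu. apply is_series_partial_sums, is_lim_seq_Reals in Hu.
  apply the_real_eq; [exact Hu|]. intros l' Hu'. exact (UL_sequence _ _ _ Hu' Hu).
Qed.

Section NonnegativeSeries.
Variables (a : nat -> R) (l : R).
Hypotheses (Ha : is_series a l) (Ha_ge0 : forall n, 0 <= a n).

Lemma is_series_partial_le (n : nat) : sum_f_R0 a n <= l.
Proof.
  apply is_lim_seq_incr_compare; [now apply is_series_partial_sums|].
  intros m. simpl. specialize (Ha_ge0 (S m)). lra.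
Qed.

Lemma is_series_ge0 : 0 <= l.
Proof. apply Rle_trans with (sum_f_R0 a 0); [apply Ha_ge0|apply is_series_partial_le]. Qed.

Lemma is_series_term_le (n : nat) : a n <= l.
Proof.
  apply Rle_trans with (sum_f_R0 a n); [|apply is_series_partial_le].
  destruct n as [|n]; simpl; [lra|].
  pose proof (cond_pos_sum a n Ha_ge0). lra.
Qed.

End NonnegativeSeries.

Lemma is_series_le (a b : nat -> R) (la lb : R) :
  is_series a la -> is_series b lb -> (forall n, a n <= b n) -> la <= lb.
Proof.
  intros Ha Hb Hab. apply is_series_partial_sums in Ha, Hb.
  apply (is_lim_seq_le (sum_f_R0 a) (sum_f_R0 b) la lb); auto.
  intros n. induction n as [|n IH]; simpl; [apply Hab|]. specialize (Hab (S n)). lra.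
Qed.

Lemma is_series_Rabs_le (a b : nat -> R) (la lb : R) :
  is_series a la -> is_series b lb -> (forall n, Rabs (a n) <= b n) -> Rabs la <= lb.
Proof.
  intros Ha Hb Hab. apply Rabs_le. split.
  - assert (- lb <= la); [|lra].
    apply (is_series_le (fun n => - b n) a); auto.
    + replace (- lb) with (-1 * lb) by ring.
      apply (is_series_ext' (fun n => -1 * b n)); [intros n; ring|].
      now apply is_series_scal_l'.
    + intros n. specialize (Hab n). apply Rabs_le_between in Hab. lra.
  - apply (is_series_le a b); auto.
    intros n. eapply Rle_trans; [apply Rle_abs|apply Hab].
Qed.

Lemma ex_series_le_ge0 (a b : nat -> R) :
  (forall n, 0 <= a n <= b n) -> ex_series b -> ex_series a.
Proof.
  intros Hab. apply (ex_series_le a b). intros n.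
  change (norm (a n)) with (Rabs (a n)). rewrite Rabs_pos_eq; apply Hab.
Qed.

Lemma is_series_finite_support (a : nat -> R) (N : nat) :
  (forall n, (N < n)%nat -> a n = 0) -> is_series a (sum_f_R0 a N).
Proof.
  intros Ha. apply is_series_partial_sums.
  apply is_lim_seq_ext_loc with (fun _ => sum_f_R0 a N); [|apply is_lim_seq_const].
  exists N. intros n Hn. induction n as [|n IH].
  - now replace N with 0%nat by lia.
  - destruct (Nat.eq_dec N (S n)) as [->|HN]; [reflexivity|].
    simpl. rewrite <- IH, Ha by lia. ring.
Qed.

Lemma is_series_tail (a : nat -> R) (l : R) (N : nat) :
  is_series a l -> is_series (fun k => a (S N + k)%nat) (l - sum_f_R0 a N).
Proof.
  intros Ha. apply (is_series_incr_n a (S N)); [lia|].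
  rewrite sum_n_Reals. simpl pred. change (plus (l - sum_f_R0 a N) (sum_f_R0 a N)) with
    (l - sum_f_R0 a N + sum_f_R0 a N).
  now replace (l - sum_f_R0 a N + sum_f_R0 a N) with l by ring.
Qed.

Lemma is_series_exp (x : R) : is_series (fun n => x ^ n / INR (fact n)) (exp x).
Proof.
  assert (H := is_exp_Reals x). unfold is_pseries in H.
  revert H. apply is_series_ext'. intros n.
  rewrite pow_n_pow. unfold scal; simpl. unfold mult; simpl. unfold Rdiv. ring.
Qed.

Lemma is_lim_pinfty_spec (g : R -> R) (l : R) :
  is_lim g p_infty l <->
  forall eps, 0 < eps -> exists M, forall b, M <= b -> Rabs (g b - l) < eps.
Proof.
  rewrite <- is_lim_spec. split.
  - intros H eps Heps. destruct (H (mkposreal eps Heps)) as [M HM].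
    exists (M + 1). intros b Hb. apply HM. lra.
  - intros H eps. destruct (H eps (cond_pos eps)) as [M HM].
    exists M. intros b Hb. apply HM. lra.
Qed.

Lemma is_lim_pinfty_sum (g : nat -> R -> R) (l : nat -> R) (N : nat) :
  (forall n, is_lim (g n) p_infty (l n)) ->
  is_lim (fun b => sum_f_R0 (fun n => g n b) N) p_infty (sum_f_R0 l N).
Proof.
  intros Hg. induction N as [|N IH]; simpl; [apply Hg|].
  now apply is_lim_plus'.
Qed.

Lemma is_lim_pinfty_ge0_le (g h : R -> R) (M : R) :
  (forall b, M <= b -> 0 <= g b <= h b) -> is_lim h p_infty 0 -> is_lim g p_infty 0.
Proof.
  intros Hgh. apply is_lim_le_le_loc with (fun _ => 0); [|apply is_lim_const].
  exists M. intros b Hb. apply Hgh. lra.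
Qed.

Lemma is_lim_exp_opp_pinfty (a : R) : 0 < a -> is_lim (fun b => exp (- (a * b))) p_infty 0.
Proof.
  intros Ha. apply is_lim_pinfty_spec. intros eps Heps.
  exists (- ln eps / a + 1). intros b Hb.
  rewrite Rminus_0_r, Rabs_pos_eq by (left; apply exp_pos).
  rewrite <- (exp_ln eps) by exact Heps. apply exp_increasing.
  apply Rmult_le_compat_l with (r := a) in Hb; [|lra].
  replace (a * (- ln eps / a + 1)) with (- ln eps + a) in Hb by (field; lra).
  lra.
Qed.

Lemma ex_RInt_plus' (f g : R -> R) (a b : R) :
  ex_RInt f a b -> ex_RInt g a b -> ex_RInt (fun x => f x + g x) a b.
Proof. exact (ex_RInt_plus f g a b). Qed.

Lemma ex_RInt_minus' (f g : R -> R) (a b : R) :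
  ex_RInt f a b -> ex_RInt g a b -> ex_RInt (fun x => f x - g x) a b.
Proof. exact (ex_RInt_minus f g a b). Qed.

Lemma ex_RInt_scal' (f : R -> R) (a b c : R) :
  ex_RInt f a b -> ex_RInt (fun x => c * f x) a b.
Proof. exact (ex_RInt_scal f a b c). Qed.

Lemma RInt_plus' (f g : R -> R) (a b : R) : ex_RInt f a b -> ex_RInt g a b ->
  RInt (fun x => f x + g x) a b = RInt f a b + RInt g a b.
Proof. exact (RInt_plus f g a b). Qed.

Lemma RInt_minus' (f g : R -> R) (a b : R) : ex_RInt f a b -> ex_RInt g a b ->
  RInt (fun x => f x - g x) a b = RInt f a b - RInt g a b.
Proof. exact (RInt_minus f g a b). Qed.

Lemma RInt_scal' (f : R -> R) (a b c : R) :
  ex_RInt f a b -> RInt (fun x => c * f x) a b = c * RInt f a b.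
Proof. exact (RInt_scal f a b c). Qed.

Lemma ex_RInt_sum (u : nat -> R -> R) (a b : R) (N : nat) :
  (forall n, ex_RInt (u n) a b) -> ex_RInt (fun x => sum_f_R0 (fun n => u n x) N) a b.
Proof. intros Hu. induction N; simpl; auto using ex_RInt_plus'. Qed.

Lemma RInt_sum (u : nat -> R -> R) (a b : R) (N : nat) :
  (forall n, ex_RInt (u n) a b) ->
  RInt (fun x => sum_f_R0 (fun n => u n x) N) a b = sum_f_R0 (fun n => RInt (u n) a b) N.
Proof.
  intros Hu. induction N as [|N IH]; simpl; [reflexivity|].
  rewrite RInt_plus', IH; auto using ex_RInt_sum.
Qed.

Lemma ex_RInt_continuous' (f : R -> R) (a b : R) :
  (forall x, continuous f x) -> ex_RInt f a b.
Proof. intros Hf. apply (ex_RInt_continuous f). intros; apply Hf. Qed.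

Lemma RInt_Defs_eq (f : R -> R) (a b : R) : ex_RInt f a b -> Defs.RInt f a b = RInt f a b.
Proof.
  intros Hf. apply the_real_eq.
  - exists (ex_RInt_Reals_0 _ _ _ Hf). symmetry. apply RInt_Reals.
  - intros l [pr <-]. symmetry. apply RInt_Reals.
Qed.

Definition is_RInt_pinfty (f : R -> R) (a l : R) : Prop :=
  (forall b, a <= b -> ex_RInt f a b) /\ is_lim (fun b => RInt f a b) p_infty l.

Lemma RInt_inf_eq (f : R -> R) (a l : R) : is_RInt_pinfty f a l -> RInt_inf f a = l.
Proof.
  intros [Hex Hlim].
  assert (Hspec : forall l' : R, is_lim (fun b => RInt f a b) p_infty l' <->
    forall eps, 0 < eps -> exists M, forall b, M <= b -> Rabs (Defs.RInt f a b - l') < eps).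
  { intros l'. rewrite is_lim_pinfty_spec.
    split; intros H eps Heps; destruct (H eps Heps) as [M HM]; exists (Rmax M a);
      intros b Hb; pose proof (Rmax_l M a); pose proof (Rmax_r M a);
      [rewrite RInt_Defs_eq|rewrite <- RInt_Defs_eq]; try apply HM; try apply Hex; lra. }
  apply the_real_eq; [now apply Hspec|].
  intros l' Hl'%Hspec. apply is_lim_unique in Hl', Hlim. congruence.
Qed.

Section ImproperIntegrals.
Variable a : R.

Lemma is_RInt_pinfty_ext (f g : R -> R) (l : R) :
  (forall x, a <= x -> f x = g x) -> is_RInt_pinfty f a l -> is_RInt_pinfty g a l.
Proof.
  intros Hfg [Hex Hlim].
  assert (Hint : forall b, a <= b -> forall x, Rmin a b < x < Rmax a b -> f x = g x).
  { intros b Hb x Hx. rewrite Rmin_left in Hx by exact Hb. apply Hfg. lra. }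
  split.
  - intros b Hb. exact (ex_RInt_ext f g a b (Hint b Hb) (Hex b Hb)).
  - apply (is_lim_ext_loc (fun b => RInt f a b)); [|exact Hlim].
    exists a. intros b Hb. apply RInt_ext, Hint. lra.
Qed.

Lemma is_RInt_pinfty_plus (f g : R -> R) (lf lg : R) :
  is_RInt_pinfty f a lf -> is_RInt_pinfty g a lg -> is_RInt_pinfty (fun x => f x + g x) a (lf + lg).
Proof.
  intros [Hf Lf] [Hg Lg]. split; [auto using ex_RInt_plus'|].
  apply (is_lim_ext_loc (fun b => RInt f a b + RInt g a b)); [|now apply is_lim_plus'].
  exists a. intros b Hb. rewrite RInt_plus'; [reflexivity|apply Hf|apply Hg]; lra.
Qed.

Lemma is_RInt_pinfty_minus (f g : R -> R) (lf lg : R) :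
  is_RInt_pinfty f a lf -> is_RInt_pinfty g a lg -> is_RInt_pinfty (fun x => f x - g x) a (lf - lg).
Proof.
  intros [Hf Lf] [Hg Lg]. split; [auto using ex_RInt_minus'|].
  apply (is_lim_ext_loc (fun b => RInt f a b - RInt g a b)); [|now apply is_lim_minus'].
  exists a. intros b Hb. rewrite RInt_minus'; [reflexivity|apply Hf|apply Hg]; lra.
Qed.

Lemma is_RInt_pinfty_scal (f : R -> R) (c l : R) :
  is_RInt_pinfty f a l -> is_RInt_pinfty (fun x => c * f x) a (c * l).
Proof.
  intros [Hf Lf]. split; [auto using ex_RInt_scal'|].
  apply (is_lim_ext_loc (fun b => c * RInt f a b)); [|exact (is_lim_scal_l _ c _ l Lf)].
  exists a. intros b Hb. rewrite RInt_scal'; [reflexivity|apply Hf]; lra.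
Qed.

Lemma is_RInt_pinfty_sum (u : nat -> R -> R) (l : nat -> R) (N : nat) :
  (forall n, is_RInt_pinfty (u n) a (l n)) ->
  is_RInt_pinfty (fun x => sum_f_R0 (fun n => u n x) N) a (sum_f_R0 l N).
Proof. intros Hu. induction N; simpl; auto using is_RInt_pinfty_plus. Qed.

Lemma is_RInt_pinfty_partial_le (f : R -> R) (l : R) :
  is_RInt_pinfty f a l -> (forall x, a <= x -> 0 <= f x) ->
  forall b, a <= b -> RInt f a b <= l.
Proof.
  intros [Hex Hlim] Hf b Hb.
  enough (H : Rbar_le (RInt f a b) l) by exact H.
  apply (is_lim_le_loc (fun _ => RInt f a b) (fun B => RInt f a B) p_infty _ l);
    [|apply is_lim_const|exact Hlim].
  exists b. intros B HB.
  assert (HbB : ex_RInt f b B) by (apply (ex_RInt_Chasles_2 f a); [lra|apply Hex; lra]).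
  rewrite <- (RInt_Chasles f a b B (Hex b Hb) HbB).
  assert (0 <= RInt f b B); [|change (plus ?u ?v) with (u + v); lra].
  apply RInt_ge_0; [lra|exact HbB|]. intros x Hx. apply Hf. lra.
Qed.

End ImproperIntegrals.

Lemma is_series_RInt (u : nat -> R -> R) (F : R -> R) (M : nat -> R) (a b : R) :
  a <= b -> (forall n, ex_RInt (u n) a b) -> ex_RInt F a b ->
  (forall x, a <= x <= b -> is_series (fun n => u n x) (F x)) ->
  (forall n x, a <= x <= b -> Rabs (u n x) <= M n) -> ex_series M ->
  is_series (fun n => RInt (u n) a b) (RInt F a b).
Proof.
  intros Hab Hu HS Hser Hdom [Mtot HM].
  assert (HM_ge0 : forall n, 0 <= M n).
  { intros n. apply Rle_trans with (Rabs (u n a)); [apply Rabs_pos|apply Hdom; lra]. }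
  apply is_series_partial_sums, is_lim_seq_Reals.
  assert (HMlim := HM). apply is_series_partial_sums, is_lim_seq_Reals in HMlim.
  intros eps Heps.
  set (d := eps / (b - a + 1)).
  assert (Hd : 0 < d) by (unfold d; apply Rdiv_lt_0_compat; lra).
  destruct (HMlim d Hd) as [N HN].
  exists N. intros n Hn. unfold R_dist.
  rewrite <- RInt_sum by exact Hu.
  rewrite Rabs_minus_sym, <- RInt_minus' by auto using ex_RInt_sum.
  (* The integrand is the tail of the series, dominated by the tail of [M]. *)
  assert (Htail : forall t, a <= t <= b ->
    Rabs (F t - sum_f_R0 (fun k => u k t) n) <= Mtot - sum_f_R0 M n).
  { intros t Ht. apply (is_series_Rabs_le (fun k => u (S n + k)%nat t) (fun k => M (S n + k)%nat)).
    - now apply is_series_tail, Hser.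
    - now apply is_series_tail.
    - intros k. now apply Hdom. }
  eapply Rle_lt_trans.
  { apply (abs_RInt_le_const _ a b (Mtot - sum_f_R0 M n)); auto.
    apply ex_RInt_minus'; auto using ex_RInt_sum. }
  assert (Htail_ge0 : 0 <= Mtot - sum_f_R0 M n).
  { apply (is_series_ge0 (fun k => M (S n + k)%nat)); auto using is_series_tail. }
  specialize (HN n Hn). unfold R_dist in HN.
  rewrite Rabs_minus_sym, Rabs_pos_eq in HN by exact Htail_ge0.
  replace eps with ((b - a + 1) * d) by (unfold d; field; lra).
  nra.
Qed.

(* Monotone convergence for series of nonnegative functions on [a, +oo). *)
Lemma is_RInt_pinfty_series (u : nat -> R -> R) (F : R -> R) (a : R) (A : nat -> R) (Atot : R) :
  (forall n x, a <= x -> 0 <= u n x) ->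
  (forall x, a <= x -> is_series (fun n => u n x) (F x)) ->
  (forall b, a <= b -> exists M, ex_series M /\ forall n x, a <= x <= b -> u n x <= M n) ->
  (forall b, a <= b -> ex_RInt F a b) ->
  (forall n, is_RInt_pinfty (u n) a (A n)) ->
  is_series A Atot -> is_RInt_pinfty F a Atot.
Proof.
  intros Hu_ge0 Hser Hdom HexS HuA HA.
  assert (Hser_b : forall b, a <= b -> is_series (fun n => RInt (u n) a b) (RInt F a b)).
  { intros b Hb. destruct (Hdom b Hb) as [M [HM HuM]].
    apply (is_series_RInt u F M); auto.
    - intros n. now apply HuA.
    - intros x Hx. apply Hser. lra.
    - intros n x Hx. rewrite Rabs_pos_eq by (apply Hu_ge0; lra). now apply HuM. }
  split; [exact HexS|]. apply is_lim_pinfty_spec. intros eps Heps.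
  assert (HAlim := HA). apply is_series_partial_sums, is_lim_seq_Reals in HAlim.
  destruct (HAlim (eps / 2)) as [N HN]; [lra|].
  specialize (HN N (Nat.le_refl _)). unfold R_dist in HN.
  assert (Hlim : is_lim (fun b => sum_f_R0 (fun n => RInt (u n) a b) N) p_infty (sum_f_R0 A N)).
  { apply (is_lim_pinfty_sum (fun n b => RInt (u n) a b)). intros n. apply HuA. }
  rewrite is_lim_pinfty_spec in Hlim.
  destruct (Hlim (eps / 2)) as [B HB]; [lra|].
  exists (Rmax B a). intros b Hb.
  pose proof (Rmax_l B a). pose proof (Rmax_r B a).
  specialize (HB b ltac:(lra)).
  assert (Hup : RInt F a b <= Atot).
  { apply (is_series_le (fun n => RInt (u n) a b) A); [apply Hser_b; lra|exact HA|].
    intros n. apply (is_RInt_pinfty_partial_le a); auto; lra. }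
  assert (Hlo : sum_f_R0 (fun n => RInt (u n) a b) N <= RInt F a b).
  { apply is_series_partial_le; [apply Hser_b; lra|].
    intros n. apply RInt_ge_0; [lra|apply HuA; lra|]. intros x Hx. apply Hu_ge0. lra. }
  apply Rabs_def2 in HN. apply Rabs_def2 in HB. apply Rabs_def1; lra.
Qed.

(** * Poisson probabilities *)

Lemma ex_derive_continuous' (f : R -> R) (x : R) : ex_derive f x -> continuous f x.
Proof. apply (@ex_derive_continuous R_AbsRing R_NormedModule). Qed.

Lemma INR_fact_gt0 (n : nat) : 0 < INR (fact n).
Proof. apply lt_0_INR, lt_O_fact. Qed.

Definition pois (x : R) (n : nat) : R := exp (- x) * x ^ n / INR (fact n).

Definition pois_cdf (x : R) (n : nat) : R := sum_f_R0 (pois x) n.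

Lemma pois_ge0 (x : R) (n : nat) : 0 <= x -> 0 <= pois x n.
Proof.
  intros Hx. unfold pois. pose proof (exp_pos (- x)). pose proof (INR_fact_gt0 n).
  pose proof (pow_le x n Hx). apply Rdiv_le_0_compat; nra.
Qed.

Lemma is_series_pois_pow (x r : R) :
  is_series (fun n => pois x n * r ^ n) (exp (- x * (1 - r))).
Proof.
  replace (exp (- x * (1 - r))) with (exp (- x) * exp (x * r))
    by (rewrite <- exp_plus; f_equal; ring).
  apply (is_series_ext' (fun n => exp (- x) * ((x * r) ^ n / INR (fact n)))).
  - intros n. unfold pois. rewrite Rpow_mult_distr. field. apply Rgt_not_eq, INR_fact_gt0.
  - apply is_series_scal_l', is_series_exp.
Qed.

Lemma is_series_pois (x : R) : is_series (pois x) 1.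
Proof.
  replace 1 with (exp (- x * (1 - 1))) by (rewrite Rminus_diag, Rmult_0_r; apply exp_0).
  apply (is_series_ext' (fun n => pois x n * 1 ^ n)); [intros n; rewrite pow1; ring|].
  apply is_series_pois_pow.
Qed.

Lemma pois_le1 (x : R) (n : nat) : 0 <= x -> pois x n <= 1.
Proof. intros Hx. apply (is_series_term_le (pois x)); auto using is_series_pois, pois_ge0. Qed.

Lemma pois_cdf_ge0 (x : R) (n : nat) : 0 <= x -> 0 <= pois_cdf x n.
Proof. intros Hx. apply cond_pos_sum. auto using pois_ge0. Qed.

Lemma pois_cdf_le1 (x : R) (n : nat) : 0 <= x -> pois_cdf x n <= 1.
Proof. intros Hx. apply (is_series_partial_le (pois x)); auto using is_series_pois, pois_ge0. Qed.

Lemma pois_cdf_0 (n : nat) : pois_cdf 0 n = 1.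
Proof.
  unfold pois_cdf, pois. induction n as [|n IH]; simpl.
  - rewrite Ropp_0, exp_0. field.
  - rewrite IH. rewrite Rmult_0_l. unfold Rdiv. ring.
Qed.

Lemma pois_le_exp_half (x : R) (n : nat) : 0 <= x -> pois x n <= 2 ^ n * exp (- (x / 2)).
Proof.
  intros Hx.
  assert (H : (x / 2) ^ n / INR (fact n) <= exp (x / 2)).
  { apply (is_series_term_le (fun n => (x / 2) ^ n / INR (fact n))); [apply is_series_exp|].
    intros m. pose proof (INR_fact_gt0 m). apply Rdiv_le_0_compat; [apply pow_le|]; lra. }
  assert (Hsplit : pois x n =
    2 ^ n * exp (- (x / 2)) * ((x / 2) ^ n / INR (fact n) * exp (- (x / 2)))).
  { unfold pois.
    replace (x ^ n) with (2 ^ n * (x / 2) ^ n) by (rewrite <- Rpow_mult_distr; f_equal; field).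
    replace (- x) with (- (x / 2) + - (x / 2)) by field. rewrite exp_plus.
    field. apply Rgt_not_eq, INR_fact_gt0. }
  assert (Hle1 : (x / 2) ^ n / INR (fact n) * exp (- (x / 2)) <= 1).
  { rewrite exp_Ropp. pose proof (exp_pos (x / 2)).
    apply (Rmult_le_reg_r (exp (x / 2))); [lra|].
    rewrite Rmult_assoc, Rinv_l by lra. lra. }
  rewrite Hsplit. pose proof (exp_pos (- (x / 2))). pose proof (pow_lt 2 n ltac:(lra)).
  replace (2 ^ n * exp (- (x / 2))) with (2 ^ n * exp (- (x / 2)) * 1) at 2 by ring.
  apply Rmult_le_compat_l; nra.
Qed.

Lemma pois_cdf_le_exp_half (x : R) (n : nat) : 0 <= x ->
  pois_cdf x n <= sum_f_R0 (fun i => 2 ^ i) n * exp (- (x / 2)).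
Proof.
  intros Hx. unfold pois_cdf. rewrite Rmult_comm, scal_sum.
  apply sum_Rle. intros i _. now apply pois_le_exp_half.
Qed.

Lemma pois_cdf_lim (g : R -> R) (n : nat) (M c : R) : 0 < c ->
  (forall b, M <= b -> c * b <= g b) -> is_lim (fun b => pois_cdf (g b) n) p_infty 0.
Proof.
  intros Hc Hg.
  apply (is_lim_pinfty_ge0_le _ (fun b => sum_f_R0 (fun i => 2 ^ i) n * exp (- (c / 2 * b)))
    (Rmax M 0)).
  - intros b Hb. pose proof (Rmax_l M 0). pose proof (Rmax_r M 0).
    assert (Hgb : c * b <= g b) by (apply Hg; lra).
    assert (0 <= g b) by nra.
    split; [now apply pois_cdf_ge0|].
    eapply Rle_trans; [now apply pois_cdf_le_exp_half|].
    apply Rmult_le_compat_l; [apply cond_pos_sum; intros; apply pow_le; lra|].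
    assert (Hexp : - (g b / 2) <= - (c / 2 * b)) by lra.
    destruct Hexp as [Hlt|Heq]; [left; now apply exp_increasing|right; now rewrite Heq].
  - replace (Finite 0) with (Rbar_mult (sum_f_R0 (fun i => 2 ^ i) n) 0)
      by (simpl; f_equal; ring).
    apply is_lim_scal_l, is_lim_exp_opp_pinfty. lra.
Qed.

Lemma continuous_pois (n : nat) (x : R) : continuous (fun y => pois y n) x.
Proof. apply ex_derive_continuous'. unfold pois. auto_derive. easy. Qed.

Lemma pois_derive (x : R) (n : nat) :
  is_derive (fun y => pois y (S n)) x (pois x n - pois x (S n)).
Proof.
  unfold pois. auto_derive; [easy|].
  assert (E1 : INR (fact n + n * fact n) = INR (S n) * INR (fact n))
    by (rewrite <- mult_INR; f_equal; simpl; lia).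
  assert (E2 : match n with 0%nat => 1 | S _ => INR n + 1 end = INR (S n))
    by (destruct n; simpl; auto).
  rewrite E1, E2, fact_simpl, mult_INR. simpl pow.
  field. split; [apply Rgt_not_eq, INR_fact_gt0|apply Rgt_not_eq, lt_0_INR; lia].
Qed.

Lemma pois_cdf_derive (x : R) (n : nat) : is_derive (fun y => pois_cdf y n) x (- pois x n).
Proof.
  induction n as [|n IH].
  - unfold pois_cdf, pois. simpl. auto_derive; [easy|]. field.
  - unfold pois_cdf. simpl. fold (pois_cdf x n).
    replace (- pois x (S n)) with (- pois x n + (pois x n - pois x (S n))) by ring.
    apply (is_derive_plus (fun y => pois_cdf y n) (fun y => pois y (S n))); [exact IH|].
    apply pois_derive.
Qed.

Lemma continuous_pois_lin (a : R) (n : nat) (x : R) : continuous (fun y => pois (a * y) n) x.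
Proof.
  apply (continuous_comp (fun y => a * y) (fun y => pois y n)); [|apply continuous_pois].
  apply ex_derive_continuous'. auto_derive. easy.
Qed.

Lemma continuous_pois_cdf_lin (a : R) (n : nat) (x : R) :
  continuous (fun y => pois_cdf (a * y) n) x.
Proof.
  apply (continuous_comp (fun y => a * y) (fun y => pois_cdf y n)).
  - apply ex_derive_continuous'. auto_derive. easy.
  - apply ex_derive_continuous'. eexists. apply pois_cdf_derive.
Qed.

(* Gamma densities ([g u = a u]) and the integrand of the Marcum Q-function ([g u = u^2 / 2])
   are of this form. *)
Lemma is_RInt_pois_comp (g dg : R -> R) (n : nat) (b0 b1 : R) :
  (forall x, is_derive g x (dg x)) -> (forall x, continuous dg x) ->
  is_RInt (fun u => dg u * pois (g u) n) b0 b1 (pois_cdf (g b0) n - pois_cdf (g b1) n).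
Proof.
  intros Hg Hdg.
  replace (pois_cdf (g b0) n - pois_cdf (g b1) n)
    with (minus (- pois_cdf (g b1) n) (- pois_cdf (g b0) n))
    by (unfold minus, plus, opp; simpl; ring).
  apply (is_RInt_derive (fun u => - pois_cdf (g u) n)).
  - intros x _.
    replace (dg x * pois (g x) n) with (- (dg x * - pois (g x) n)) by ring.
    apply (is_derive_opp (fun u => pois_cdf (g u) n)).
    exact (is_derive_comp (fun y => pois_cdf y n) g x _ _ (pois_cdf_derive (g x) n) (Hg x)).
  - intros x _. apply (continuous_mult dg (fun u => pois (g u) n)); [apply Hdg|].
    apply (continuous_comp g (fun y => pois y n)); [|apply continuous_pois].
    apply ex_derive_continuous'. exists (dg x). apply Hg.
Qed.

Lemma is_RInt_pois_lin (a b : R) (n : nat) :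
  is_RInt (fun u => a * pois (a * u) n) 0 b (1 - pois_cdf (a * b) n).
Proof.
  replace (1 - pois_cdf (a * b) n) with (pois_cdf (a * 0) n - pois_cdf (a * b) n)
    by (now rewrite Rmult_0_r, pois_cdf_0).
  apply (is_RInt_pois_comp (fun u => a * u) (fun _ => a)).
  - intros x. auto_derive; [easy|ring].
  - intros x. apply continuous_const.
Qed.

Lemma is_RInt_pinfty_pois_lin (a : R) (n : nat) : 0 < a ->
  is_RInt_pinfty (fun u => a * pois (a * u) n) 0 1.
Proof.
  intros Ha. split; [intros b _; eexists; apply is_RInt_pois_lin|].
  apply (is_lim_ext_loc (fun b => 1 - pois_cdf (a * b) n)).
  - exists 0. intros b _. symmetry. apply is_RInt_unique, is_RInt_pois_lin.
  - replace (Finite 1) with (Finite (1 - 0)) by (f_equal; ring).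
    apply is_lim_minus'; [apply is_lim_const|].
    apply (pois_cdf_lim _ n 0 a); [exact Ha|]. intros; lra.
Qed.

Lemma is_RInt_pinfty_pois_sq (b : R) (n : nat) :
  is_RInt_pinfty (fun u => u * pois (u ^ 2 / 2) n) b (pois_cdf (b ^ 2 / 2) n).
Proof.
  assert (Hint : forall B, is_RInt (fun u => u * pois (u ^ 2 / 2) n) b B
                             (pois_cdf (b ^ 2 / 2) n - pois_cdf (B ^ 2 / 2) n)).
  { intros B. apply (is_RInt_pois_comp (fun u => u ^ 2 / 2) (fun u => u)).
    - intros x. auto_derive; [easy|field].
    - intros x. apply continuous_id. }
  split; [intros B _; eexists; apply Hint|].
  apply (is_lim_ext_loc (fun B => pois_cdf (b ^ 2 / 2) n - pois_cdf (B ^ 2 / 2) n)).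
  - exists b. intros B _. symmetry. apply is_RInt_unique, Hint.
  - replace (Finite (pois_cdf (b ^ 2 / 2) n)) with (Finite (pois_cdf (b ^ 2 / 2) n - 0))
      by (f_equal; ring).
    apply is_lim_minus'; [apply is_lim_const|].
    apply (pois_cdf_lim _ n 2 (1 / 2)); [lra|]. intros B HB. nra.
Qed.

(** * Bessel series, LoS density and Marcum Q-function *)

(* [bessel_series z = I_0 (2 sqrt z)]; unlike [bessel_I0], it is a power series in its
   argument, which makes continuity and the Poisson expansions below immediate. *)
Definition bessel_series (z : R) : R := PSeries (fun k => / INR (fact k) ^ 2) z.

Lemma CV_radius_bessel : CV_radius (fun k => / INR (fact k) ^ 2) = p_infty.
Proof.
  apply CV_radius_infinite_DAlembert.
  { intros n. apply Rgt_not_eq, Rinv_0_lt_compat, pow_lt, INR_fact_gt0. }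
  assert (Hratio : forall n, Rabs (/ INR (fact (S n)) ^ 2 / / INR (fact n) ^ 2)
                             = / INR (S n) * / INR (S n)).
  { intros n. rewrite fact_simpl, mult_INR.
    pose proof (INR_fact_gt0 n). pose proof (lt_0_INR (S n) (Nat.lt_0_succ n)).
    rewrite Rabs_pos_eq; [field; lra|].
    left. apply Rdiv_lt_0_compat; apply Rinv_0_lt_compat, pow_lt; nra. }
  assert (Hinv : is_lim_seq (fun n => / INR (S n)) 0).
  { replace (Finite 0) with (Rbar_inv p_infty) by reflexivity.
    apply is_lim_seq_inv; [|discriminate].
    apply (is_lim_seq_incr_1 INR). apply is_lim_seq_INR. }
  apply (is_lim_seq_ext (fun n => / INR (S n) * / INR (S n))); [intros n; now rewrite Hratio|].
  replace (Finite 0) with (Finite (0 * 0)) by (f_equal; ring).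
  now apply is_lim_seq_mult'.
Qed.

Lemma is_series_bessel (z : R) :
  is_series (fun k => z ^ k / INR (fact k) ^ 2) (bessel_series z).
Proof.
  assert (Hz : ex_pseries (fun k => / INR (fact k) ^ 2) z)
    by (apply CV_radius_inside; rewrite CV_radius_bessel; exact I).
  apply PSeries_correct in Hz. revert Hz. apply is_series_ext'. intros n.
  rewrite pow_n_pow. unfold scal; simpl; unfold mult; simpl. unfold Rdiv. ring.
Qed.

Lemma continuous_bessel (z : R) : continuous bessel_series z.
Proof.
  apply continuity_pt_filterlim, PSeries_continuity. rewrite CV_radius_bessel. exact I.
Qed.

Lemma bessel_I0_series (x : R) : bessel_I0 x = bessel_series ((x / 2) ^ 2).
Proof.
  apply series_sum_eq. generalize (is_series_bessel ((x / 2) ^ 2)).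
  apply is_series_ext'. intros k. now rewrite pow_mult.
Qed.

Lemma is_series_pois_pois (x y : R) :
  is_series (fun n => pois x n * pois y n) (exp (- (x + y)) * bessel_series (x * y)).
Proof.
  apply (is_series_ext' (fun n => exp (- (x + y)) * ((x * y) ^ n / INR (fact n) ^ 2))).
  - intros n. unfold pois. replace (- (x + y)) with (- x + - y) by ring.
    rewrite exp_plus, Rpow_mult_distr. field. apply Rgt_not_eq, INR_fact_gt0.
  - apply is_series_scal_l', is_series_bessel.
Qed.

(* Continuous on all of [R]; agrees with [dens_LoS K] on [0, +oo). *)
Definition dLoS (K h : R) : R := / 2 * exp (- K - / 2 * h) * bessel_series (K * (/ 2 * h)).

Lemma dens_LoS_dLoS (K h : R) : 0 <= K -> 0 <= h -> dens_LoS K h = dLoS K h.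
Proof.
  intros HK Hh. unfold dens_LoS, dLoS. rewrite bessel_I0_series.
  replace (- K - h / 2) with (- K - / 2 * h) by field. do 2 f_equal.
  unfold Rdiv. rewrite Rpow_mult_distr, pow2_sqrt by nra. field.
Qed.

Lemma continuous_dLoS (K x : R) : continuous (dLoS K) x.
Proof.
  apply (continuous_mult (fun h => / 2 * exp (- K - / 2 * h))
                         (fun h => bessel_series (K * (/ 2 * h)))).
  - apply ex_derive_continuous'. auto_derive. easy.
  - apply (continuous_comp (fun h => K * (/ 2 * h)) bessel_series); [|apply continuous_bessel].
    apply ex_derive_continuous'. auto_derive. easy.
Qed.

(* The noncentral chi-squared density as a Poisson([K]) mixture of Gamma densities. *)
Lemma is_series_dLoS (K h : R) :
  is_series (fun j => pois K j * (/ 2 * pois (/ 2 * h) j)) (dLoS K h).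
Proof.
  unfold dLoS.
  apply (is_series_ext'
    (fun j => / 2 * exp (- K - / 2 * h) * ((K * (/ 2 * h)) ^ j / INR (fact j) ^ 2))).
  - intros j. unfold pois. replace (- K - / 2 * h) with (- K + - (/ 2 * h)) by ring.
    rewrite exp_plus, Rpow_mult_distr. field. apply Rgt_not_eq, INR_fact_gt0.
  - apply is_series_scal_l', is_series_bessel.
Qed.

Lemma ex_series_pois_scal_r (x c : R) : ex_series (fun j => pois x j * c).
Proof. exists (1 * c). apply is_series_scal_r, is_series_pois. Qed.

Lemma is_series_RInt_dLoS (K t : R) : 0 <= K -> 0 <= t ->
  is_series (fun j => pois K j * (1 - pois_cdf (/ 2 * t) j)) (RInt (dLoS K) 0 t).
Proof.
  intros HK Ht.
  apply (is_series_ext' (fun j => RInt (fun x => pois K j * (/ 2 * pois (/ 2 * x) j)) 0 t)).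
  - intros j. rewrite RInt_scal'; [|eexists; apply is_RInt_pois_lin].
    f_equal. apply is_RInt_unique, is_RInt_pois_lin.
  - apply (is_series_RInt _ _ (fun j => pois K j * / 2)); auto using ex_series_pois_scal_r.
    + intros n. apply ex_RInt_continuous'. intros x.
      apply (continuous_scal_r (pois K n) (fun x => / 2 * pois (/ 2 * x) n)).
      apply (continuous_scal_r (/ 2) (fun x => pois (/ 2 * x) n)), continuous_pois_lin.
    + apply ex_RInt_continuous', continuous_dLoS.
    + intros x _. apply is_series_dLoS.
    + intros n x Hx. pose proof (pois_ge0 K n HK).
      pose proof (pois_ge0 (/ 2 * x) n ltac:(lra)). pose proof (pois_le1 (/ 2 * x) n ltac:(lra)).
      rewrite Rabs_pos_eq by nra. nra.
Qed.

Lemma RInt_dLoS_bounds (K t : R) : 0 <= K -> 0 <= t -> 0 <= RInt (dLoS K) 0 t <= 1.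
Proof.
  intros HK Ht. pose proof (is_series_RInt_dLoS K t HK Ht) as H.
  assert (Hterm : forall j, 0 <= pois K j * (1 - pois_cdf (/ 2 * t) j) <= pois K j).
  { intros j. pose proof (pois_ge0 K j HK).
    pose proof (pois_cdf_ge0 (/ 2 * t) j ltac:(lra)).
    pose proof (pois_cdf_le1 (/ 2 * t) j ltac:(lra)). nra. }
  split.
  - apply (is_series_ge0 _ _ H). intros j. apply Hterm.
  - apply (is_series_le _ _ _ _ H (is_series_pois K)). intros j. apply Hterm.
Qed.

Lemma continuous_RInt_dLoS (K t : R) : continuous (fun t => RInt (dLoS K) 0 t) t.
Proof.
  apply (continuous_RInt_1 (dLoS K) 0 t (fun z => RInt (dLoS K) 0 z)).
  apply filter_forall. intros z. apply (RInt_correct (dLoS K) 0 z).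
  apply ex_RInt_continuous', continuous_dLoS.
Qed.

Lemma ex_RInt_dens_LoS (K t : R) : 0 <= K -> 0 <= t -> ex_RInt (dens_LoS K) 0 t.
Proof.
  intros HK Ht. apply (ex_RInt_ext (dLoS K)); [|apply ex_RInt_continuous', continuous_dLoS].
  intros x Hx. rewrite Rmin_left in Hx by exact Ht. symmetry. apply dens_LoS_dLoS; lra.
Qed.

Lemma RInt_dens_LoS (K t : R) : 0 <= K -> 0 <= t ->
  Defs.RInt (dens_LoS K) 0 t = RInt (dLoS K) 0 t.
Proof.
  intros HK Ht. rewrite RInt_Defs_eq by now apply ex_RInt_dens_LoS.
  symmetry. apply RInt_ext. intros x Hx. rewrite Rmin_left in Hx by exact Ht.
  symmetry. apply dens_LoS_dLoS; lra.
Qed.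


Lemma sq_half_ge0 (x : R) : 0 <= x ^ 2 / 2.
Proof. pose proof (pow2_ge_0 x). lra. Qed.

Lemma is_series_marcumQ_integrand (a x : R) :
  is_series (fun j => pois (a ^ 2 / 2) j * (x * pois (x ^ 2 / 2) j))
            (x * exp (- (x ^ 2 + a ^ 2) / 2) * bessel_I0 (a * x)).
Proof.
  rewrite bessel_I0_series.
  apply (is_series_ext'
    (fun j => x * exp (- (x ^ 2 + a ^ 2) / 2) * (((a * x / 2) ^ 2) ^ j / INR (fact j) ^ 2))).
  - intros j. unfold pois.
    replace (- (x ^ 2 + a ^ 2) / 2) with (- (a ^ 2 / 2) + - (x ^ 2 / 2)) by field.
    replace ((a * x / 2) ^ 2) with (a ^ 2 / 2 * (x ^ 2 / 2)) by field.
    rewrite exp_plus, Rpow_mult_distr. field. apply Rgt_not_eq, INR_fact_gt0.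
  - apply is_series_scal_l', is_series_bessel.
Qed.

Lemma continuous_marcumQ_integrand (a x : R) :
  continuous (fun x => x * exp (- (x ^ 2 + a ^ 2) / 2) * bessel_I0 (a * x)) x.
Proof.
  apply (continuous_ext
    (fun x => x * exp (- (x ^ 2 + a ^ 2) / 2) * bessel_series ((a * x / 2) ^ 2))).
  { intros y. now rewrite bessel_I0_series. }
  apply (continuous_mult (fun x => x * exp (- (x ^ 2 + a ^ 2) / 2))
                         (fun x => bessel_series ((a * x / 2) ^ 2))).
  - apply ex_derive_continuous'. auto_derive. easy.
  - apply (continuous_comp (fun x => (a * x / 2) ^ 2) bessel_series); [|apply continuous_bessel].
    apply ex_derive_continuous'. auto_derive. easy.
Qed.

Lemma is_series_marcumQ (a b : R) : 0 <= b ->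
  is_series (fun j => pois (a ^ 2 / 2) j * pois_cdf (b ^ 2 / 2) j) (marcumQ a b).
Proof.
  intros Hb.
  destruct (ex_series_le_ge0 (fun j => pois (a ^ 2 / 2) j * pois_cdf (b ^ 2 / 2) j)
              (fun j => pois (a ^ 2 / 2) j * 1)) as [Q HQ]; [|apply ex_series_pois_scal_r|].
  { intros j. pose proof (pois_ge0 _ j (sq_half_ge0 a)).
    pose proof (pois_cdf_ge0 _ j (sq_half_ge0 b)).
    pose proof (pois_cdf_le1 _ j (sq_half_ge0 b)). split; nra. }
  replace (marcumQ a b) with Q; [exact HQ|].
  symmetry. apply RInt_inf_eq.
  apply (is_RInt_pinfty_series (fun j x => pois (a ^ 2 / 2) j * (x * pois (x ^ 2 / 2) j))
           _ b (fun j => pois (a ^ 2 / 2) j * pois_cdf (b ^ 2 / 2) j) Q).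
  - intros j x Hx. pose proof (pois_ge0 _ j (sq_half_ge0 a)).
    pose proof (pois_ge0 _ j (sq_half_ge0 x)).
    apply Rmult_le_pos; [|apply Rmult_le_pos]; lra.
  - intros x _. apply is_series_marcumQ_integrand.
  - intros B HB. exists (fun j => pois (a ^ 2 / 2) j * B). split; [apply ex_series_pois_scal_r|].
    intros n x Hx. pose proof (pois_ge0 _ n (sq_half_ge0 a)).
    pose proof (pois_ge0 _ n (sq_half_ge0 x)). pose proof (pois_le1 _ n (sq_half_ge0 x)).
    apply Rmult_le_compat_l; nra.
  - intros B _. apply ex_RInt_continuous', continuous_marcumQ_integrand.
  - intros n. apply (is_RInt_pinfty_scal b (fun x => x * pois (x ^ 2 / 2) n)).
    apply is_RInt_pinfty_pois_sq.
  - exact HQ.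
Qed.

(** * Binomial and negative binomial probabilities *)

(* Binomial coefficients, extended by [0] above the diagonal. *)
Fixpoint binom (n k : nat) : nat :=
  match n, k with
  | _, O => 1%nat
  | O, S _ => 0%nat
  | S n', S k' => (binom n' k' + binom n' (S k'))%nat
  end.

Lemma binom_n0 (n : nat) : binom n 0 = 1%nat.
Proof. now destruct n. Qed.

Lemma binom_small (n k : nat) : (n < k)%nat -> binom n k = 0%nat.
Proof.
  revert k. induction n as [|n IH]; intros [|k] Hk; try lia; [reflexivity|].
  simpl. rewrite !IH by lia. reflexivity.
Qed.

Lemma binom_nn (n : nat) : binom n n = 1%nat.
Proof. induction n as [|n IH]; [reflexivity|]. simpl. now rewrite IH, binom_small by lia. Qed.

Lemma binom_fact (n k : nat) : (k <= n)%nat -> (binom n k * fact k * fact (n - k) = fact n)%nat.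
Proof.
  revert k. induction n as [|n IH]; intros k Hk.
  - now replace k with 0%nat by lia.
  - destruct k as [|k]; [rewrite binom_n0; simpl; lia|].
    simpl binom. rewrite Nat.sub_succ.
    destruct (Nat.eq_dec k n) as [->|Hkn].
    + rewrite (binom_small n (S n)), binom_nn, Nat.sub_diag by lia. simpl. lia.
    + assert (H1 := IH k ltac:(lia)). assert (H2 := IH (S k) ltac:(lia)).
      replace (n - k)%nat with (S (n - S k)) in * by lia.
      change (fact (S (n - S k))) with (S (n - S k) * fact (n - S k))%nat in *.
      change (fact (S k)) with (S k * fact k)%nat in *.
      change (fact (S n)) with (S n * fact n)%nat.
      rewrite <- H2 in H1 |- *.
      assert (Hn : n = (S k + (n - S k))%nat) by lia.
      set (m := (n - S k)%nat) in *. set (A := binom n k) in *. set (B := binom n (S k)) in *.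
      set (F := fact k) in *. set (G := fact m) in *. clearbody m A B F G.
      rewrite Hn. nia.
Qed.

Lemma INR_binom (n k : nat) : (k <= n)%nat ->
  INR (binom n k) = INR (fact n) / (INR (fact k) * INR (fact (n - k))).
Proof.
  intros Hk. rewrite <- (binom_fact n k Hk), !mult_INR. field.
  split; apply Rgt_not_eq, INR_fact_gt0.
Qed.

Definition binom_pmf (n : nat) (r : R) (a : nat) : R :=
  INR (binom n a) * r ^ a * (1 - r) ^ (n - a).

Lemma binom_pmf_gt (n : nat) (r : R) (a : nat) : (n < a)%nat -> binom_pmf n r a = 0.
Proof. intros H. unfold binom_pmf. rewrite binom_small by exact H. simpl. ring. Qed.

Lemma binom_pmf_S0 (n : nat) (r : R) : binom_pmf (S n) r 0 = (1 - r) * binom_pmf n r 0.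
Proof. unfold binom_pmf. rewrite !binom_n0, !Nat.sub_0_r. simpl. ring. Qed.

Lemma binom_pmf_SS (n : nat) (r : R) (a : nat) :
  binom_pmf (S n) r (S a) = r * binom_pmf n r a + (1 - r) * binom_pmf n r (S a).
Proof.
  unfold binom_pmf. simpl binom. rewrite plus_INR.
  destruct (Nat.lt_ge_cases n a) as [Hna|Han].
  - rewrite (binom_small n a), (binom_small n (S a)) by lia. simpl. ring.
  - destruct (Nat.eq_dec a n) as [->|Hna].
    + rewrite (binom_small n (S n)), !Nat.sub_diag by lia.
      replace (S n - S n)%nat with 0%nat by lia. simpl. ring.
    + replace (S n - S a)%nat with (n - a)%nat by lia.
      replace (n - a)%nat with (S (n - S a)) by lia. simpl. ring.
Qed.

Lemma binom_pmf_ge0 (n : nat) (r : R) (a : nat) : 0 <= r <= 1 -> 0 <= binom_pmf n r a.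
Proof.
  intros Hr. unfold binom_pmf.
  pose proof (pos_INR (binom n a)). pose proof (pow_le r a ltac:(lra)).
  pose proof (pow_le (1 - r) (n - a) ltac:(lra)). apply Rmult_le_pos; [|lra]. nra.
Qed.

Lemma sum_f_R0_Sl (f : nat -> R) (n : nat) :
  sum_f_R0 f (S n) = f 0%nat + sum_f_R0 (fun i => f (S i)) n.
Proof. apply (decomp_sum f (S n)). lia. Qed.

Lemma sum_f_R0_scal_l (f : nat -> R) (c : R) (n : nat) :
  sum_f_R0 (fun i => c * f i) n = c * sum_f_R0 f n.
Proof. rewrite scal_sum. apply sum_eq. intros; ring. Qed.

(* Conditioning on the first of [n + 1] Bernoulli([r]) trials. *)
Lemma sum_binom_pmf_S (n : nat) (r : R) (g : nat -> R) :
  sum_f_R0 (fun a => binom_pmf (S n) r a * g a) (S n) =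
  (1 - r) * sum_f_R0 (fun a => binom_pmf n r a * g a) n
  + r * sum_f_R0 (fun a => binom_pmf n r a * g (S a)) n.
Proof.
  rewrite sum_f_R0_Sl, binom_pmf_S0.
  rewrite (sum_eq _ (fun i => r * (binom_pmf n r i * g (S i))
                               + (1 - r) * (binom_pmf n r (S i) * g (S i))))
    by (intros i _; rewrite binom_pmf_SS; ring).
  rewrite plus_sum, !sum_f_R0_scal_l.
  assert (Hshift : binom_pmf n r 0 * g 0%nat + sum_f_R0 (fun i => binom_pmf n r (S i) * g (S i)) n
                   = sum_f_R0 (fun a => binom_pmf n r a * g a) n).
  { destruct n as [|n].
    - simpl. rewrite (binom_pmf_gt 0 r 1) by lia. ring.
    - rewrite (sum_f_R0_Sl (fun a => binom_pmf (S n) r a * g a)). simpl.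
      rewrite (binom_pmf_gt (S n) r (S (S n))) by lia. ring. }
  rewrite <- Hshift. ring.
Qed.

Lemma sum_binom_pmf (n : nat) (r : R) : sum_f_R0 (binom_pmf n r) n = 1.
Proof.
  induction n as [|n IH]; [unfold binom_pmf; simpl; ring|].
  rewrite (sum_eq _ (fun a => binom_pmf (S n) r a * 1)) by (intros; ring).
  rewrite sum_binom_pmf_S, !(sum_eq (fun a => binom_pmf n r a * 1) (binom_pmf n r))
    by (intros; ring).
  rewrite IH. ring.
Qed.

Definition le_ind (b a : nat) : R := if Nat.leb b a then 1 else 0.

Lemma le_ind_bounds (b a : nat) : 0 <= le_ind b a <= 1.
Proof. unfold le_ind. destruct (Nat.leb b a); lra. Qed.

Definition binom_cdf (n : nat) (p : R) (a : nat) : R :=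
  sum_f_R0 (fun b => binom_pmf n p b * le_ind b a) n.

Lemma binom_cdf_bounds (n : nat) (p : R) (a : nat) : 0 <= p <= 1 -> 0 <= binom_cdf n p a <= 1.
Proof.
  intros Hp. split.
  - apply cond_pos_sum. intros b. pose proof (binom_pmf_ge0 n p b Hp).
    pose proof (le_ind_bounds b a). nra.
  - rewrite <- (sum_binom_pmf n p). apply sum_Rle. intros b _.
    pose proof (binom_pmf_ge0 n p b Hp). pose proof (le_ind_bounds b a). nra.
Qed.

Lemma binom_cdf_SS (n : nat) (p : R) (a : nat) :
  binom_cdf (S n) p (S a) = (1 - p) * binom_cdf n p (S a) + p * binom_cdf n p a.
Proof. unfold binom_cdf. now rewrite sum_binom_pmf_S. Qed.

Lemma binom_cdf_n0 (n : nat) (p : R) : binom_cdf n p 0 = (1 - p) ^ n.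
Proof.
  unfold binom_cdf. destruct n as [|n]; [unfold binom_pmf, le_ind; simpl; ring|].
  rewrite sum_f_R0_Sl, (sum_eq _ (fun _ => 0)) by (intros; unfold le_ind; simpl; ring).
  rewrite sum_cte. unfold binom_pmf, le_ind. rewrite binom_n0. simpl. ring.
Qed.

Lemma binom_cdf_1 (p : R) (a : nat) : binom_cdf 1 p a = match a with O => 1 - p | S _ => 1 end.
Proof. unfold binom_cdf, binom_pmf, le_ind. destruct a; simpl; ring. Qed.

(* [P[b + Bernoulli(p) <= a]]. *)
Definition le_ind_mix (p : R) (a b : nat) : R := (1 - p) * le_ind b a + p * le_ind (S b) a.

Lemma le_ind_mix_bounds (p : R) (a b : nat) : 0 <= p <= 1 -> 0 <= le_ind_mix p a b <= 1.
Proof.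
  intros Hp. unfold le_ind_mix.
  pose proof (le_ind_bounds b a). pose proof (le_ind_bounds (S b) a). nra.
Qed.

Lemma binom_cdf_S_mix (n : nat) (p : R) (a : nat) :
  binom_cdf (S n) p a = sum_f_R0 (fun b => binom_pmf n p b * le_ind_mix p a b) n.
Proof.
  unfold binom_cdf. rewrite (sum_binom_pmf_S n p (fun b => le_ind b a)).
  unfold le_ind_mix. rewrite <- !sum_f_R0_scal_l, <- plus_sum. apply sum_eq. intros; ring.
Qed.

(* Probability of exactly [i] successes before the [(k + 1)]-st failure. *)
Definition negbin_pmf (p : R) (k i : nat) : R :=
  INR (binom (k + i) i) * p ^ i * (1 - p) ^ (S k).

Definition negbin_cdf (p : R) (j k : nat) : R := sum_f_R0 (negbin_pmf p k) j.

Lemma negbin_cdf_0 (p : R) (k : nat) : negbin_cdf p 0 k = (1 - p) ^ S k.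
Proof. unfold negbin_cdf, negbin_pmf. simpl. rewrite binom_n0. simpl. ring. Qed.

Lemma negbin_cdf_j0 (p : R) (j : nat) : negbin_cdf p j 0 = 1 - p ^ S j.
Proof.
  induction j as [|j IH]; [unfold negbin_cdf, negbin_pmf; simpl; ring|].
  unfold negbin_cdf in *. simpl sum_f_R0. rewrite IH.
  unfold negbin_pmf. simpl (0 + S j)%nat. rewrite binom_nn. simpl. ring.
Qed.

Definition binom_mix_cdf (p : R) (j k : nat) : R :=
  sum_f_R0 (fun a => binom_pmf j (1 - p) a * binom_cdf (S k) p a) j.

Lemma negbin_cdf_SS (p : R) (j k : nat) :
  negbin_cdf p (S j) (S k) = (1 - p) * negbin_cdf p (S j) k + p * negbin_cdf p j (S k).
Proof.
  assert (Hpmf : forall i, negbin_pmf p (S k) (S i)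
                          = (1 - p) * negbin_pmf p k (S i) + p * negbin_pmf p (S k) i).
  { intros i. unfold negbin_pmf.
    replace (S k + S i)%nat with (S (S k + i)) by lia.
    replace (k + S i)%nat with (S k + i)%nat by lia.
    simpl binom. rewrite plus_INR. simpl pow. ring. }
  unfold negbin_cdf. induction j as [|j IH].
  - simpl. rewrite Hpmf. unfold negbin_pmf. rewrite !binom_n0. simpl. ring.
  - change (sum_f_R0 (negbin_pmf p (S k)) (S (S j)))
      with (sum_f_R0 (negbin_pmf p (S k)) (S j) + negbin_pmf p (S k) (S (S j))).
    change (sum_f_R0 (negbin_pmf p k) (S (S j)))
      with (sum_f_R0 (negbin_pmf p k) (S j) + negbin_pmf p k (S (S j))).
    change (sum_f_R0 (negbin_pmf p (S k)) (S j))
      with (sum_f_R0 (negbin_pmf p (S k)) j + negbin_pmf p (S k) (S j)) at 2.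
    rewrite IH, Hpmf. ring.
Qed.

Lemma binom_mix_cdf_SS (p : R) (j k : nat) :
  binom_mix_cdf p (S j) (S k) = (1 - p) * binom_mix_cdf p (S j) k + p * binom_mix_cdf p j (S k).
Proof.
  unfold binom_mix_cdf at 1. rewrite sum_binom_pmf_S.
  replace (1 - (1 - p)) with p by ring.
  rewrite (sum_eq (fun a => binom_pmf j (1 - p) a * binom_cdf (S (S k)) p (S a))
            (fun a => (1 - p) * (binom_pmf j (1 - p) a * binom_cdf (S k) p (S a))
                      + p * (binom_pmf j (1 - p) a * binom_cdf (S k) p a)))
    by (intros; rewrite binom_cdf_SS; ring).
  rewrite plus_sum, !sum_f_R0_scal_l.
  unfold binom_mix_cdf. rewrite (sum_binom_pmf_S j (1 - p) (binom_cdf (S k) p)).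
  replace (1 - (1 - p)) with p by ring. ring.
Qed.

(* At most [j] successes before the [(k + 1)]-st failure means at least [k + 1] failures in
   the first [j + k + 1] trials: [a] failures among the first [j] and at most [a] successes
   among the last [k + 1]. *)
Lemma negbin_cdf_binom_mix (p : R) (j k : nat) : negbin_cdf p j k = binom_mix_cdf p j k.
Proof.
  revert k. induction j as [|j IHj]; intros k.
  - rewrite negbin_cdf_0. unfold binom_mix_cdf. simpl.
    rewrite binom_cdf_n0. unfold binom_pmf. simpl. ring.
  - induction k as [|k IHk].
    + unfold binom_mix_cdf. rewrite sum_f_R0_Sl.
      rewrite (sum_eq _ (fun i => binom_pmf (S j) (1 - p) (S i)))
        by (intros; rewrite binom_cdf_1; ring).
      rewrite binom_cdf_1.
      assert (Htot := sum_binom_pmf (S j) (1 - p)). rewrite sum_f_R0_Sl in Htot.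
      assert (H0 : binom_pmf (S j) (1 - p) 0 = p ^ S j).
      { unfold binom_pmf. rewrite binom_n0. replace (1 - (1 - p)) with p by ring. simpl. ring. }
      rewrite negbin_cdf_j0, H0. rewrite H0 in Htot. simpl pow in *. lra.
    + rewrite negbin_cdf_SS, binom_mix_cdf_SS, IHk, IHj. ring.
Qed.

(** * Poisson thinning and double series *)

(* Binomial([r]) thinning of a Poisson([x]) count is Poisson([x r]). *)
Lemma is_series_pois_thinning (x r : R) (h : nat -> R) (L : R) :
  0 <= x -> 0 <= r <= 1 -> (forall a, 0 <= h a) ->
  is_series (fun a => pois (x * r) a * h a) L ->
  is_series (fun j => pois x j * sum_f_R0 (fun a => binom_pmf j r a * h a) j) L.
Proof.
  intros Hx Hr Hh HL.
  set (X := fun a => (x * r) ^ a / INR (fact a) * h a).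
  set (Y := fun m => (x * (1 - r)) ^ m / INR (fact m)).
  assert (HX : is_series X (exp (x * r) * L)).
  { apply (is_series_ext' (fun a => exp (x * r) * (pois (x * r) a * h a))).
    - intros a. unfold X, pois. rewrite exp_Ropp.
      field. split; [apply Rgt_not_eq, INR_fact_gt0|apply Rgt_not_eq, exp_pos].
    - now apply is_series_scal_l'. }
  assert (HX_ge0 : forall n, 0 <= X n).
  { intros n. unfold X. pose proof (INR_fact_gt0 n).
    pose proof (pow_le (x * r) n ltac:(nra)). apply Rmult_le_pos; [|apply Hh].
    apply Rdiv_le_0_compat; lra. }
  assert (HY_ge0 : forall n, 0 <= Y n).
  { intros n. unfold Y. pose proof (INR_fact_gt0 n).
    pose proof (pow_le (x * (1 - r)) n ltac:(nra)). apply Rdiv_le_0_compat; lra. }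
  pose proof (is_series_mult_pos X Y _ _ HX (is_series_exp _) HX_ge0 HY_ge0) as HXY.
  apply (is_series_scal_l' (exp (- x))) in HXY.
  replace (exp (- x) * (exp (x * r) * L * exp (x * (1 - r)))) with L in HXY.
  2:{ replace (exp (- x) * (exp (x * r) * L * exp (x * (1 - r))))
        with (exp (- x + x * r + x * (1 - r)) * L) by (rewrite !exp_plus; ring).
      replace (- x + x * r + x * (1 - r)) with 0 by ring. rewrite exp_0. ring. }
  revert HXY. apply is_series_ext'. intros n.
  rewrite <- !sum_f_R0_scal_l. apply sum_eq. intros k Hk.
  unfold X, Y, pois, binom_pmf. rewrite INR_binom by exact Hk.
  replace (x ^ n) with (x ^ k * x ^ (n - k)) by (rewrite <- pow_add; f_equal; lia).
  rewrite !Rpow_mult_distr. field.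
  repeat split; apply Rgt_not_eq, INR_fact_gt0.
Qed.

Lemma ex_series_bounded_ge0 (a : nat -> R) (B : R) :
  (forall n, 0 <= a n) -> (forall n, sum_f_R0 a n <= B) -> ex_series a.
Proof.
  intros Ha HB. destruct (ex_finite_lim_seq_incr (sum_f_R0 a) B) as [l Hl]; auto.
  - intros n. simpl. specialize (Ha (S n)). lra.
  - exists l. now apply is_series_partial_sums.
Qed.

Section NonnegativeDoubleSeries.
Variable f : nat -> nat -> R.
Hypothesis f_ge0 : forall j k, 0 <= f j k.

Lemma is_series_swap_le (r : nat -> R) (L : R) :
  (forall j, is_series (f j) (r j)) -> is_series r L ->
  exists c L', (forall k, is_series (fun j => f j k) (c k)) /\ is_series c L' /\ L' <= L.
Proof.
  intros Hr HL.
  assert (Hcol : forall k, is_series (fun j => f j k) (Series (fun j => f j k))).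
  { intros k. apply Series_correct, (ex_series_le_ge0 _ r); [|exists L; exact HL].
    intros j. split; [apply f_ge0|]. apply (is_series_term_le (f j)); auto. }
  assert (Hcol_ge0 : forall k, 0 <= Series (fun j => f j k)).
  { intros k. apply (is_series_ge0 _ _ (Hcol k)). auto. }
  assert (Hpartial : forall K, sum_f_R0 (fun k => Series (fun j => f j k)) K <= L).
  { intros K.
    assert (HK : is_series (fun j => sum_f_R0 (fun k => f j k) K)
                           (sum_f_R0 (fun k => Series (fun j => f j k)) K)).
    { induction K as [|K IH]; [apply Hcol|]. simpl. now apply is_series_plus'. }
    apply (is_series_le _ _ _ _ HK HL). intros j.
    apply (is_series_partial_le (f j)); auto. }
  destruct (ex_series_bounded_ge0 _ L Hcol_ge0 Hpartial) as [L' HL'].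
  exists (fun k => Series (fun j => f j k)), L'. repeat split; auto.
  apply is_series_partial_sums in HL'.
  exact (is_lim_seq_le _ (fun _ => L) L' L Hpartial HL' (is_lim_seq_const L)).
Qed.

End NonnegativeDoubleSeries.

Lemma is_series_swap (f : nat -> nat -> R) (r : nat -> R) (L : R) :
  (forall j k, 0 <= f j k) -> (forall j, is_series (f j) (r j)) -> is_series r L ->
  exists c, (forall k, is_series (fun j => f j k) (c k)) /\ is_series c L.
Proof.
  intros Hf Hr HL.
  destruct (is_series_swap_le f Hf r L Hr HL) as [c [L' [Hc [HL' Hle]]]].
  destruct (is_series_swap_le (fun k j => f j k) (fun k j => Hf j k) c L' Hc HL')
    as [r' [L'' [Hr' [HL'' Hle']]]].
  assert (HL2 : is_series r L'').
  { revert HL''. apply is_series_ext'. intros j.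
    now rewrite <- (is_series_unique _ _ (Hr j)), <- (is_series_unique _ _ (Hr' j)). }
  assert (L'' = L) by (now rewrite <- (is_series_unique _ _ HL2), (is_series_unique _ _ HL)).
  exists c. split; [exact Hc|]. replace L with L' by lra. exact HL'.
Qed.

Lemma is_series_pois_le_ind (x : R) (a : nat) : 0 <= x ->
  is_series (fun b => pois x b * le_ind b a) (pois_cdf x a).
Proof.
  intros Hx.
  replace (pois_cdf x a) with (sum_f_R0 (fun b => pois x b * le_ind b a) a).
  - apply is_series_finite_support. intros n Hn. unfold le_ind.
    replace (Nat.leb n a) with false by (symmetry; apply Nat.leb_gt; lia). ring.
  - apply sum_eq. intros i Hi. unfold le_ind.
    replace (Nat.leb i a) with true by (symmetry; apply Nat.leb_le; lia). ring.
Qed.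

Lemma is_series_pois_le_ind_mix (x p : R) (a : nat) : 0 <= x ->
  is_series (fun b => pois x b * le_ind_mix p a b) (pois_cdf x a - p * pois x a).
Proof.
  intros Hx.
  assert (Hshift : is_series (fun b => pois x b * le_ind (S b) a) (pois_cdf x a - pois x a)).
  { destruct a as [|a].
    - replace (pois_cdf x 0 - pois x 0) with (sum_f_R0 (fun _ => 0) 0)
        by (unfold pois_cdf; simpl; ring).
      apply (is_series_ext' (fun _ => 0)); [intros; unfold le_ind; simpl; ring|].
      now apply is_series_finite_support.
    - replace (pois_cdf x (S a) - pois x (S a)) with (pois_cdf x a)
        by (unfold pois_cdf; simpl; ring).
      now apply is_series_pois_le_ind. }
  replace (pois_cdf x a - p * pois x a)
    with ((1 - p) * pois_cdf x a + p * (pois_cdf x a - pois x a)) by ring.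
  apply (is_series_ext' (fun b => (1 - p) * (pois x b * le_ind b a)
                                  + p * (pois x b * le_ind (S b) a)));
    [intros; unfold le_ind_mix; ring|].
  apply is_series_plus'; apply is_series_scal_l'; auto using is_series_pois_le_ind.
Qed.

Lemma ex_series_pois_bounded (x : R) (h : nat -> R) : 0 <= x -> (forall n, 0 <= h n <= 1) ->
  ex_series (fun n => pois x n * h n).
Proof.
  intros Hx Hh. apply (ex_series_le_ge0 _ (fun n => pois x n * 1)); [|apply ex_series_pois_scal_r].
  intros n. specialize (Hh n). pose proof (pois_ge0 x n Hx). split; nra.
Qed.

Lemma is_series_pois_negbin_cdf (lam p Y : R) (k : nat) : 0 <= lam -> 0 <= p <= 1 ->
  is_series (fun a => pois (lam * (1 - p)) a * binom_cdf (S k) p a) Y ->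
  is_series (fun j => pois lam j * negbin_cdf p j k) Y.
Proof.
  intros Hlam Hp HY.
  apply (is_series_ext' (fun j => pois lam j
           * sum_f_R0 (fun a => binom_pmf j (1 - p) a * binom_cdf (S k) p a) j)).
  - intros j. now rewrite negbin_cdf_binom_mix.
  - apply is_series_pois_thinning; [exact Hlam|lra| |exact HY].
    intros a. apply (binom_cdf_bounds (S k) p a Hp).
Qed.

Lemma is_series_pois_binom_cdf (mu p : R) (a : nat) : 0 <= mu -> 0 <= p <= 1 ->
  is_series (fun k => pois mu k * binom_cdf (S k) p a)
            (pois_cdf (mu * p) a - p * pois (mu * p) a).
Proof.
  intros Hmu Hp.
  apply (is_series_ext' (fun k => pois mu k
           * sum_f_R0 (fun b => binom_pmf k p b * le_ind_mix p a b) k)).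
  - intros k. now rewrite binom_cdf_S_mix.
  - apply is_series_pois_thinning; [exact Hmu|exact Hp| |].
    + intros b. apply (le_ind_mix_bounds p a b Hp).
    + apply is_series_pois_le_ind_mix. nra.
Qed.

(* The double series behind the LoS/LoS outage; [Q] is the Marcum Q-function. *)
Lemma is_series_negbin_double (lam mu p Q : R) : 0 <= lam -> 0 <= mu -> 0 <= p <= 1 ->
  is_series (fun j => pois (lam * (1 - p)) j * pois_cdf (mu * p) j) Q ->
  exists c : nat -> R,
    (forall k, is_series (fun j => pois lam j * (1 - negbin_cdf p j k)) (c k)) /\
    is_series (fun k => pois mu k * c k)
      (1 - Q + p * (exp (- (lam * (1 - p) + mu * p)) * bessel_series (lam * (1 - p) * (mu * p)))).
Proof.
  intros Hlam Hmu Hp HQ.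
  set (A := lam * (1 - p)) in *. set (B := mu * p) in *.
  assert (HA : 0 <= A) by (unfold A; nra).
  set (f := fun a k => pois A a * (pois mu k * binom_cdf (S k) p a)).
  assert (Hf : forall a k, 0 <= f a k).
  { intros a k. unfold f. pose proof (pois_ge0 A a HA). pose proof (pois_ge0 mu k Hmu).
    pose proof (binom_cdf_bounds (S k) p a Hp). apply Rmult_le_pos; [lra|]. nra. }
  assert (Htot : is_series (fun a => pois A a * (pois_cdf B a - p * pois B a))
                   (Q - p * (exp (- (A + B)) * bessel_series (A * B)))).
  { apply (is_series_ext' (fun a => pois A a * pois_cdf B a - p * (pois A a * pois B a)));
      [intros; ring|].
    apply is_series_minus'; [exact HQ|]. apply is_series_scal_l', is_series_pois_pois. }
  destruct (is_series_swap f _ _ Hf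
              (fun a => is_series_scal_l' _ _ _ (is_series_pois_binom_cdf mu p a Hmu Hp)) Htot)
    as [c [Hc Hctot]].
  set (Y := fun k => Series (fun a => pois A a * binom_cdf (S k) p a)).
  assert (HY : forall k, is_series (fun a => pois A a * binom_cdf (S k) p a) (Y k)).
  { intros k. apply Series_correct, ex_series_pois_bounded; [exact HA|].
    intros a. now apply binom_cdf_bounds. }
  assert (Hcy : forall k, c k = pois mu k * Y k).
  { intros k. rewrite <- (is_series_unique _ _ (Hc k)). apply is_series_unique.
    apply (is_series_ext' (fun a => pois mu k * (pois A a * binom_cdf (S k) p a)));
      [intros; unfold f; ring|].
    apply is_series_scal_l', HY. }
  exists (fun k => 1 - Y k). split.
  - intros k. apply (is_series_ext' (fun j => pois lam j - pois lam j * negbin_cdf p j k));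
      [intros; ring|].
    apply is_series_minus'; [apply is_series_pois|].
    now apply is_series_pois_negbin_cdf.
  - replace (1 - Q + p * (exp (- (A + B)) * bessel_series (A * B)))
      with (1 - (Q - p * (exp (- (A + B)) * bessel_series (A * B)))) by ring.
    apply (is_series_ext' (fun k => pois mu k - c k)); [intros k; rewrite Hcy; ring|].
    apply is_series_minus'; [apply is_series_pois|exact Hctot].
Qed.

(** * Conditional outage probabilities *)

(* Integrated over [y], this says that the number of rate-[s] Poisson events before the
   [(k + 1)]-st rate-[al] event is negative binomial. *)
Lemma pois_lin_mul (al s y : R) (k i : nat) : 0 < al -> 0 < s ->
  al * pois (al * y) k * pois (s * y) i
  = negbin_pmf (s / (al + s)) k i * ((al + s) * pois ((al + s) * y) (k + i)).
Proof.
  intros Hal Hs. unfold negbin_pmf, pois.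
  rewrite INR_binom by lia. replace (k + i - i)%nat with k by lia.
  replace (1 - s / (al + s)) with (al / (al + s)) by (field; lra).
  replace (- ((al + s) * y)) with (- (al * y) + - (s * y)) by ring.
  rewrite exp_plus, !Rpow_mult_distr, !pow_add. simpl pow. unfold Rdiv.
  rewrite !Rpow_mult_distr, !pow_inv.
  field. repeat split; apply Rgt_not_eq; first [apply INR_fact_gt0|apply pow_lt; lra|lra].
Qed.

(* [al * pois (al * y) k] is the Gamma(k + 1) density of rate [al] and [1 - pois_cdf (s * y) j]
   the Gamma(j + 1) cdf of rate [s]. *)
Lemma is_RInt_pinfty_pois_pois_cdf (al s : R) (k j : nat) : 0 < al -> 0 < s ->
  is_RInt_pinfty (fun y => al * pois (al * y) k * (1 - pois_cdf (s * y) j)) 0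
    (1 - negbin_cdf (s / (al + s)) j k).
Proof.
  intros Hal Hs.
  apply (is_RInt_pinfty_ext 0 (fun y => al * pois (al * y) k
     - sum_f_R0 (fun i => negbin_pmf (s / (al + s)) k i
                          * ((al + s) * pois ((al + s) * y) (k + i))) j)).
  { intros y _. unfold pois_cdf.
    rewrite Rmult_minus_distr_l, Rmult_1_r, <- sum_f_R0_scal_l. f_equal.
    apply sum_eq. intros i _. rewrite <- (pois_lin_mul al s y k i Hal Hs). ring. }
  apply is_RInt_pinfty_minus; [apply is_RInt_pinfty_pois_lin; exact Hal|].
  unfold negbin_cdf. rewrite (sum_eq _ (fun i => negbin_pmf (s / (al + s)) k i * 1))
    by (intros; ring).
  apply (is_RInt_pinfty_sum 0 (fun i y => _ * ((al + s) * pois ((al + s) * y) (k + i)))).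
  intros i. apply (is_RInt_pinfty_scal 0 (fun y => (al + s) * pois ((al + s) * y) (k + i))).
  apply is_RInt_pinfty_pois_lin. lra.
Qed.

Lemma is_RInt_pinfty_pois_mixture (w : nat -> R) (kk jj : nat -> nat) (al s : R)
    (F : R -> R) (L : R) :
  0 < al -> 0 < s -> (forall n, 0 <= w n) -> ex_series w ->
  (forall y, 0 <= y -> is_series
     (fun n => w n * (al * pois (al * y) (kk n) * (1 - pois_cdf (s * y) (jj n)))) (F y)) ->
  (forall b, 0 <= b -> ex_RInt F 0 b) ->
  is_series (fun n => w n * (1 - negbin_cdf (s / (al + s)) (jj n) (kk n))) L ->
  is_RInt_pinfty F 0 L.
Proof.
  intros Hal Hs Hw [W HW] HF HexF HL.
  assert (Hterm : forall n y, 0 <= y ->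
    0 <= al * pois (al * y) (kk n) * (1 - pois_cdf (s * y) (jj n)) <= al).
  { intros n y Hy. pose proof (pois_ge0 (al * y) (kk n) ltac:(nra)).
    pose proof (pois_le1 (al * y) (kk n) ltac:(nra)).
    pose proof (pois_cdf_ge0 (s * y) (jj n) ltac:(nra)).
    pose proof (pois_cdf_le1 (s * y) (jj n) ltac:(nra)).
    assert (pois (al * y) (kk n) * (1 - pois_cdf (s * y) (jj n)) <= 1) by nra.
    split; [apply Rmult_le_pos|]; nra. }
  apply (is_RInt_pinfty_series
           (fun n y => w n * (al * pois (al * y) (kk n) * (1 - pois_cdf (s * y) (jj n))))
           F 0 (fun n => w n * (1 - negbin_cdf (s / (al + s)) (jj n) (kk n))) L);
    [| |intros b _; exists (fun n => w n * al); split| | |exact HL].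
  - intros n y Hy. apply Rmult_le_pos; [apply Hw|apply Hterm, Hy].
  - exact HF.
  - exists (W * al). now apply is_series_scal_r.
  - intros n y Hy. apply Rmult_le_compat_l; [apply Hw|apply Hterm; lra].
  - exact HexF.
  - intros n. apply is_RInt_pinfty_scal, is_RInt_pinfty_pois_pois_cdf; assumption.
Qed.

Lemma dens_NLoS_pois (y : R) : dens_NLoS y = 1 * pois (1 * y) 0.
Proof. unfold dens_NLoS, pois. simpl. rewrite !Rmult_1_l. field. Qed.

Lemma is_RInt_dens_NLoS (t : R) : is_RInt dens_NLoS 0 t (1 - pois_cdf (1 * t) 0).
Proof.
  apply (is_RInt_ext (fun u => 1 * pois (1 * u) 0)); [intros; now rewrite dens_NLoS_pois|].
  apply is_RInt_pois_lin.
Qed.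

Lemma RInt_dens_NLoS (t : R) : Defs.RInt dens_NLoS 0 t = 1 - pois_cdf (1 * t) 0.
Proof.
  rewrite RInt_Defs_eq by (eexists; apply is_RInt_dens_NLoS).
  apply is_RInt_unique, is_RInt_dens_NLoS.
Qed.

Lemma continuous_RInt_dLoS_lin (K a x : R) : continuous (fun y => RInt (dLoS K) 0 (a * y)) x.
Proof.
  apply (continuous_comp (fun y => a * y) (fun t => RInt (dLoS K) 0 t));
    [|apply continuous_RInt_dLoS].
  apply ex_derive_continuous'. auto_derive. easy.
Qed.

Definition outage_integrand (fm fI : R -> R) (bm bI gt y : R) : R :=
  fI y * Defs.RInt fm 0 (gt * bI * y / bm).

Section OutageCases.
Variables bm bI gt : R.
Hypotheses (Hbm : 0 < bm) (HbI : 0 < bI) (Hgt : 0 < gt).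

Let c := gt * bI / bm.

Let c_gt0 : 0 < c.
Proof. unfold c. apply Rdiv_lt_0_compat; nra. Qed.

Let threshold_eq (y : R) : gt * bI * y / bm = c * y.
Proof. unfold c. field. lra. Qed.

Lemma is_RInt_pinfty_outage_NN :
  is_RInt_pinfty (outage_integrand dens_NLoS dens_NLoS bm bI gt) 0 (po_NN_closed bm bI gt).
Proof.
  replace (po_NN_closed bm bI gt) with (1 - negbin_cdf (c / (1 + c)) 0 0).
  2:{ rewrite negbin_cdf_0. unfold po_NN_closed, c. simpl. field. split; nra. }
  apply (is_RInt_pinfty_ext 0 (fun y => 1 * pois (1 * y) 0 * (1 - pois_cdf (c * y) 0))).
  - intros y Hy. unfold outage_integrand.
    now rewrite threshold_eq, dens_NLoS_pois, RInt_dens_NLoS, (Rmult_1_l (c * y)).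
  - apply is_RInt_pinfty_pois_pois_cdf; lra.
Qed.

Lemma is_RInt_pinfty_outage_LN (Km : R) : 0 < Km ->
  is_RInt_pinfty (outage_integrand (dens_LoS Km) dens_NLoS bm bI gt) 0 (po_LN_closed bm bI gt Km).
Proof.
  intros HKm. set (rho := (c / 2) / (1 + c / 2)).
  replace (po_LN_closed bm bI gt Km) with (rho * exp (- Km * (1 - rho))).
  2:{ unfold po_LN_closed, rho, c. f_equal; [|f_equal]; field; split; nra. }
  assert (Hint : forall y, 0 <= y -> outage_integrand (dens_LoS Km) dens_NLoS bm bI gt y
                                     = 1 * pois (1 * y) 0 * RInt (dLoS Km) 0 (c * y)).
  { intros y Hy. unfold outage_integrand.
    now rewrite threshold_eq, dens_NLoS_pois, RInt_dens_LoS by nra. }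
  apply (is_RInt_pinfty_pois_mixture (pois Km) (fun _ => 0%nat) (fun j => j) 1 (c / 2));
    try lra.
  - intros n. apply pois_ge0. lra.
  - exists 1. apply is_series_pois.
  - intros y Hy. rewrite Hint by exact Hy.
    apply (is_series_ext'
      (fun j => 1 * pois (1 * y) 0 * (pois Km j * (1 - pois_cdf (/ 2 * (c * y)) j)))).
    + intros j. replace (/ 2 * (c * y)) with (c / 2 * y) by field. ring.
    + apply is_series_scal_l', is_series_RInt_dLoS; nra.
  - intros b Hb. apply (ex_RInt_ext (fun y => 1 * pois (1 * y) 0 * RInt (dLoS Km) 0 (c * y))).
    + intros y Hy. rewrite Rmin_left in Hy by lra. symmetry. apply Hint. lra.
    + apply ex_RInt_continuous'. intros y.
      apply (continuous_mult (fun y => 1 * pois (1 * y) 0) (fun y => RInt (dLoS Km) 0 (c * y))).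
      * apply (continuous_scal_r 1 (fun y => pois (1 * y) 0)), continuous_pois_lin.
      * apply continuous_RInt_dLoS_lin.
  - fold rho. apply (is_series_ext' (fun j => rho * (pois Km j * rho ^ j))).
    + intros j. rewrite negbin_cdf_j0. simpl pow. ring.
    + apply is_series_scal_l', is_series_pois_pow.
Qed.

Lemma is_RInt_pinfty_outage_NL (KI : R) : 0 < KI ->
  is_RInt_pinfty (outage_integrand dens_NLoS (dens_LoS KI) bm bI gt) 0 (po_NL_closed bm bI gt KI).
Proof.
  intros HKI. set (rho := c / (/ 2 + c)).
  replace (po_NL_closed bm bI gt KI) with (1 - (1 - rho) * exp (- KI * (1 - (1 - rho)))).
  2:{ unfold po_NL_closed, rho, c. do 2 f_equal; [|f_equal]; field; split; nra. }
  assert (Hint : forall y, 0 <= y ->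
    outage_integrand dens_NLoS (dens_LoS KI) bm bI gt y = dLoS KI y * (1 - pois_cdf (c * y) 0)).
  { intros y Hy. unfold outage_integrand.
    now rewrite threshold_eq, RInt_dens_NLoS, dens_LoS_dLoS, (Rmult_1_l (c * y)) by lra. }
  apply (is_RInt_pinfty_pois_mixture (pois KI) (fun k => k) (fun _ => 0%nat) (/ 2) c);
    try lra.
  - intros n. apply pois_ge0. lra.
  - exists 1. apply is_series_pois.
  - intros y Hy. rewrite Hint by exact Hy.
    apply (is_series_ext' (fun k => pois KI k * (/ 2 * pois (/ 2 * y) k)
                                     * (1 - pois_cdf (c * y) 0))); [intros k; ring|].
    apply is_series_scal_r, is_series_dLoS.
  - intros b Hb. apply (ex_RInt_ext (fun y => dLoS KI y * (1 - pois_cdf (c * y) 0))).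
    + intros y Hy. rewrite Rmin_left in Hy by lra. symmetry. apply Hint. lra.
    + apply ex_RInt_continuous'. intros y.
      apply (continuous_mult (dLoS KI) (fun y => 1 - pois_cdf (c * y) 0));
        [apply continuous_dLoS|].
      apply (continuous_minus (fun _ => 1) (fun y => pois_cdf (c * y) 0));
        [apply continuous_const|apply continuous_pois_cdf_lin].
  - fold rho. apply (is_series_ext' (fun k => pois KI k - (1 - rho) * (pois KI k * (1 - rho) ^ k))).
    + intros k. rewrite negbin_cdf_0. simpl pow. ring.
    + apply is_series_minus'; [apply is_series_pois|].
      apply is_series_scal_l', is_series_pois_pow.
Qed.

Let is_RInt_pinfty_LL_term (Km : R) (k : nat) (a : R) : 0 < Km ->
  is_series (fun j => pois Km j * (1 - negbin_cdf (c / 2 / (/ 2 + c / 2)) j k)) a ->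
  is_RInt_pinfty (fun y => / 2 * pois (/ 2 * y) k * RInt (dLoS Km) 0 (c * y)) 0 a.
Proof.
  intros HKm Ha.
  apply (is_RInt_pinfty_pois_mixture (pois Km) (fun _ => k) (fun j => j) (/ 2) (c / 2));
    try lra; [intros n; apply pois_ge0; lra|exists 1; apply is_series_pois| | |exact Ha].
  - intros y Hy.
    apply (is_series_ext' (fun j => / 2 * pois (/ 2 * y) k
                                     * (pois Km j * (1 - pois_cdf (/ 2 * (c * y)) j)))).
    + intros j. replace (/ 2 * (c * y)) with (c / 2 * y) by field. ring.
    + apply is_series_scal_l', is_series_RInt_dLoS; nra.
  - intros b _. apply ex_RInt_continuous'. intros y.
    apply (continuous_mult (fun y => / 2 * pois (/ 2 * y) k) (fun y => RInt (dLoS Km) 0 (c * y))).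
    + apply (continuous_scal_r (/ 2) (fun y => pois (/ 2 * y) k)), continuous_pois_lin.
    + apply continuous_RInt_dLoS_lin.
Qed.

Let is_RInt_pinfty_outage_LL_series (Km KI : R) (a : nat -> R) (L : R) : 0 < Km -> 0 < KI ->
  (forall k, is_series (fun j => pois Km j * (1 - negbin_cdf (c / 2 / (/ 2 + c / 2)) j k)) (a k)) ->
  is_series (fun k => pois KI k * a k) L ->
  is_RInt_pinfty (outage_integrand (dens_LoS Km) (dens_LoS KI) bm bI gt) 0 L.
Proof.
  intros HKm HKI Ha HL.
  apply (is_RInt_pinfty_ext 0 (fun y => dLoS KI y * RInt (dLoS Km) 0 (c * y))).
  { intros y Hy. unfold outage_integrand.
    now rewrite threshold_eq, dens_LoS_dLoS, RInt_dens_LoS by nra. }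
  apply (is_RInt_pinfty_series
           (fun k y => pois KI k * (/ 2 * pois (/ 2 * y) k * RInt (dLoS Km) 0 (c * y)))
           _ 0 (fun k => pois KI k * a k)); [| | | |intros k|exact HL].
  - intros k y Hy. pose proof (pois_ge0 KI k ltac:(lra)).
    pose proof (pois_ge0 (/ 2 * y) k ltac:(lra)).
    pose proof (RInt_dLoS_bounds Km (c * y) ltac:(lra) ltac:(nra)).
    apply Rmult_le_pos; [lra|]. apply Rmult_le_pos; [|lra]. lra.
  - intros y Hy.
    apply (is_series_ext' (fun k => pois KI k * (/ 2 * pois (/ 2 * y) k)
                                     * RInt (dLoS Km) 0 (c * y))); [intros k; ring|].
    apply is_series_scal_r, is_series_dLoS.
  - intros b _. exists (fun k => pois KI k * / 2). split; [apply ex_series_pois_scal_r|].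
    intros k y Hy. pose proof (pois_ge0 KI k ltac:(lra)).
    pose proof (pois_ge0 (/ 2 * y) k ltac:(lra)). pose proof (pois_le1 (/ 2 * y) k ltac:(lra)).
    pose proof (RInt_dLoS_bounds Km (c * y) ltac:(lra) ltac:(nra)).
    apply Rmult_le_compat_l; [lra|]. nra.
  - intros b _. apply ex_RInt_continuous'. intros y.
    apply (continuous_mult (dLoS KI) (fun y => RInt (dLoS Km) 0 (c * y)));
      [apply continuous_dLoS|apply continuous_RInt_dLoS_lin].
  - apply (is_RInt_pinfty_scal 0 (fun y => / 2 * pois (/ 2 * y) k * RInt (dLoS Km) 0 (c * y))).
    now apply is_RInt_pinfty_LL_term.
Qed.

Lemma is_RInt_pinfty_outage_LL (Km KI : R) : 0 < Km -> 0 < KI ->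
  is_RInt_pinfty (outage_integrand (dens_LoS Km) (dens_LoS KI) bm bI gt) 0
    (po_LL_closed bm bI gt Km KI).
Proof.
  intros HKm HKI.
  set (d := bm + gt * bI). assert (Hd : 0 < d) by (unfold d; nra).
  set (p := c / 2 / (/ 2 + c / 2)).
  assert (Hp : p = gt * bI / d) by (unfold p, d, c; field; split; nra).
  assert (Hq : 1 - p = bm / d) by (rewrite Hp; unfold d; field; apply Rgt_not_eq, Hd).
  assert (Hp01 : 0 <= p <= 1).
  { rewrite Hp. split; [apply Rdiv_le_0_compat; nra|].
    apply Rmult_le_reg_r with d; [exact Hd|]. unfold Rdiv.
    rewrite Rmult_assoc, Rinv_l by lra. unfold d. nra. }
  set (qa := sqrt (2 * Km * bm / d)). set (qb := sqrt (2 * gt * KI * bI / d)).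
  assert (HQ : is_series (fun j => pois (Km * (1 - p)) j * pois_cdf (KI * p) j) (marcumQ qa qb)).
  { apply (is_series_ext' (fun j => pois (qa ^ 2 / 2) j * pois_cdf (qb ^ 2 / 2) j)).
    - intros j. unfold qa, qb.
      rewrite !pow2_sqrt
        by (apply Rdiv_le_0_compat; [repeat apply Rmult_le_pos|]; lra).
      rewrite Hq, Hp. f_equal; f_equal; field; lra.
    - apply is_series_marcumQ, sqrt_pos. }
  destruct (is_series_negbin_double Km KI p _ ltac:(lra) ltac:(lra) Hp01 HQ) as [a [Ha Htot]].
  replace (po_LL_closed bm bI gt Km KI) with (1 - marcumQ qa qb
      + p * (exp (- (Km * (1 - p) + KI * p)) * bessel_series (Km * (1 - p) * (KI * p)))).
  - now apply (is_RInt_pinfty_outage_LL_series Km KI a).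
  - unfold po_LL_closed. fold d qa qb. rewrite bessel_I0_series, <- Hp.
    replace (- ((Km * bm + gt * KI * bI) / d)) with (- (Km * (1 - p) + KI * p))
      by (rewrite Hq, Hp; field; lra).
    replace ((2 * bm / d * sqrt (gt * Km * KI * bI / bm) / 2) ^ 2)
      with ((bm / d) ^ 2 * sqrt (gt * Km * KI * bI / bm) ^ 2) by (field; lra).
    rewrite pow2_sqrt by (apply Rdiv_le_0_compat; [repeat apply Rmult_le_pos|]; lra).
    replace ((bm / d) ^ 2 * (gt * Km * KI * bI / bm)) with (Km * (1 - p) * (KI * p))
      by (rewrite Hq, Hp; field; lra).
    ring.
Qed.

End OutageCases.

Lemma outage_eq (fm fI : R -> R) (bm bI gt l : R) :
  is_RInt_pinfty (outage_integrand fm fI bm bI gt) 0 l -> outage fm fI bm bI gt = l.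
Proof. apply RInt_inf_eq. Qed.

Lemma RInt_dens_mix (p K t : R) : 0 <= K -> 0 <= t ->
  Defs.RInt (dens_mix p K) 0 t
  = p * Defs.RInt (dens_LoS K) 0 t + (1 - p) * Defs.RInt dens_NLoS 0 t.
Proof.
  intros HK Ht.
  pose proof (ex_RInt_dens_LoS K t HK Ht) as HL.
  assert (HN : ex_RInt dens_NLoS 0 t) by (eexists; apply is_RInt_dens_NLoS).
  unfold dens_mix. rewrite !RInt_Defs_eq by auto using ex_RInt_plus', ex_RInt_scal'.
  rewrite RInt_plus', !RInt_scal'; auto using ex_RInt_scal'.
Qed.

Lemma outage_integrand_mix (pm Km pI KI bm bI gt y : R) :
  0 < bm -> 0 < bI -> 0 < gt -> 0 <= Km -> 0 <= y ->
  outage_integrand (dens_mix pm Km) (dens_mix pI KI) bm bI gt y =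
    pm * pI * outage_integrand (dens_LoS Km) (dens_LoS KI) bm bI gt y
  + pm * (1 - pI) * outage_integrand (dens_LoS Km) dens_NLoS bm bI gt y
  + (1 - pm) * pI * outage_integrand dens_NLoS (dens_LoS KI) bm bI gt y
  + (1 - pm) * (1 - pI) * outage_integrand dens_NLoS dens_NLoS bm bI gt y.
Proof.
  intros Hbm HbI Hgt HKm Hy. unfold outage_integrand.
  assert (Ht : 0 <= gt * bI * y / bm)
    by (apply Rdiv_le_0_compat; [repeat apply Rmult_le_pos|]; lra).
  rewrite (RInt_dens_mix pm Km _ HKm Ht).
  unfold dens_mix. ring.
Qed.

Lemma is_RInt_pinfty_outage_mix (pm pI Km KI bm bI gt lLL lLN lNL lNN : R) :
  0 < bm -> 0 < bI -> 0 < gt -> 0 <= Km ->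
  is_RInt_pinfty (outage_integrand (dens_LoS Km) (dens_LoS KI) bm bI gt) 0 lLL ->
  is_RInt_pinfty (outage_integrand (dens_LoS Km) dens_NLoS bm bI gt) 0 lLN ->
  is_RInt_pinfty (outage_integrand dens_NLoS (dens_LoS KI) bm bI gt) 0 lNL ->
  is_RInt_pinfty (outage_integrand dens_NLoS dens_NLoS bm bI gt) 0 lNN ->
  is_RInt_pinfty (outage_integrand (dens_mix pm Km) (dens_mix pI KI) bm bI gt) 0
    (pm * pI * lLL + pm * (1 - pI) * lLN + (1 - pm) * pI * lNL + (1 - pm) * (1 - pI) * lNN).
Proof.
  intros Hbm HbI Hgt HKm LL LN NL NN.
  apply (is_RInt_pinfty_ext 0 _ _ _
           (fun y Hy => eq_sym (outage_integrand_mix pm Km pI KI bm bI gt y Hbm HbI Hgt HKm Hy))).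
  set (fLL := outage_integrand (dens_LoS Km) (dens_LoS KI) bm bI gt) in *.
  set (fLN := outage_integrand (dens_LoS Km) dens_NLoS bm bI gt) in *.
  set (fNL := outage_integrand dens_NLoS (dens_LoS KI) bm bI gt) in *.
  set (fNN := outage_integrand dens_NLoS dens_NLoS bm bI gt) in *.
  apply (is_RInt_pinfty_plus 0 (fun y => pm * pI * fLL y + pm * (1 - pI) * fLN y
                                        + (1 - pm) * pI * fNL y)).
  - apply (is_RInt_pinfty_plus 0 (fun y => pm * pI * fLL y + pm * (1 - pI) * fLN y)).
    + apply (is_RInt_pinfty_plus 0 (fun y => pm * pI * fLL y)); now apply is_RInt_pinfty_scal.
    + now apply is_RInt_pinfty_scal.
  - now apply is_RInt_pinfty_scal.
Qed.

Theorem theorem1 (bm bI gt pm pI Km KI : R)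
  (Hbm : 0 < bm) (HbI : 0 < bI) (Hgt : 0 < gt)
  (Hpm : 0 <= pm <= 1) (HpI : 0 <= pI <= 1)
  (HKm : 0 < Km) (HKI : 0 < KI) :
  outage (dens_LoS Km) (dens_LoS KI) bm bI gt = po_LL_closed bm bI gt Km KI /\
  outage (dens_LoS Km) dens_NLoS bm bI gt = po_LN_closed bm bI gt Km /\
  outage dens_NLoS (dens_LoS KI) bm bI gt = po_NL_closed bm bI gt KI /\
  outage dens_NLoS dens_NLoS bm bI gt = po_NN_closed bm bI gt /\
  outage (dens_mix pm Km) (dens_mix pI KI) bm bI gt =
      pm * pI * po_LL_closed bm bI gt Km KI
    + pm * (1 - pI) * po_LN_closed bm bI gt Km
    + (1 - pm) * pI * po_NL_closed bm bI gt KI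
    + (1 - pm) * (1 - pI) * po_NN_closed bm bI gt.
Proof.
  pose proof (is_RInt_pinfty_outage_LL bm bI gt Hbm HbI Hgt Km KI HKm HKI) as LL.
  pose proof (is_RInt_pinfty_outage_LN bm bI gt Hbm HbI Hgt Km HKm) as LN.
  pose proof (is_RInt_pinfty_outage_NL bm bI gt Hbm HbI Hgt KI HKI) as NL.
  pose proof (is_RInt_pinfty_outage_NN bm bI gt Hbm HbI Hgt) as NN.
  repeat split; apply outage_eq; [exact LL|exact LN|exact NL|exact NN|].
  apply is_RInt_pinfty_outage_mix; auto; lra.
Qed.
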